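(* Assume the setting below, $\mu_+(\max\{\lambda,1\})\le1$, and (A1), (A4), (A5), (A6). Let $r$ be an equilibrium solution (not necessarily regular) with $r(1)=\lambda$. Then $r'(\rho)\le\alpha_1(\rho,r(\rho))\tau(\rho)$ for all $\rho\in(0,1]$. Furthermore, if there is $\rho_0\in(0,1]$ with $r'(\rho_0)<\alpha_0(\rho_0,r(\rho_0))\tau(\rho_0)$, then $r(0)>0$.
   Context: Setting: $n\ge2$; $\kappa$ continuous on $[0,\infty)$, $\kappa_\pm=\max\{\pm\kappa,0\}$, $\mu_\pm(\lambda)=\int_0^\lambda s\kappa_\pm(s)ds$; $f$ solves $f''+\kappa f=0$, $f(0)=0$, $f'(0)=1$; $\lambda>0$. Let $\phi,h:(0,\infty)\to\mathbb R$ and $\Phi(v_1,\dots,v_n)=\sum_i\phi(v_i)+h(v_1\cdots v_n)$. For $r$ on $(0,1]$, $\tau(\rho)=f(r(\rho))/f(\rho)$. An equilibrium solution with $r(1)=\lambda$ is $r\in C^1(0,1]$, twice differentiable on $(0,1)$, $r'>0$ on $(0,1]$, $r(0):=\lim_{\rho\to0^+}r(\rho)\ge0$, $r(1)=\lambda$, satisfying on $(0,1)$ $$f(\rho)\big[\phi''(r')+h''(r'\tau^{n-1})\tau^{2(n-1)}\big]r''=(n-1)\big[f'(r)\phi'(\tau)-f'(\rho)\phi'(r')\big]-(n-1)\big(f'(r)r'-f'(\rho)\tau\big)h''(r'\tau^{n-1})\,r'\tau^{2n-3};$$ regular means $r(0)=0$. (A1) $h$ is $C^2$ and strictly convex. (A4)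 $\phi:(0,\infty)\to(0,\infty)$ is $C^2$ and convex. (A5) $v\phi'(v)$ is increasing. (A6) there is $t_0\ge0$ with $\phi'(t_0)=0$; $q_1(s)=\sup_{v>t_0}\phi'(v)/\phi'(sv)$ ($s\ge1$), $q_0(s)=\inf_{v>t_0/s}\phi'(v)/\phi'(sv)$ ($s\in(0,1]$) satisfy $q_1\in C^1[1,\infty)$, $q_0\in C^1(0,1]$, $q_1(s)\to0$ as $s\to\infty$, $q_0(s)\to\infty$ as $s\to0^+$, $q_1'<0$, $q_0'<0$. $b_0(\rho)=\min_{[0,\rho]}f'$, $b_1(\rho)=\max_{[0,\rho]}f'$; $\alpha_1(\rho,s)=\max\{b_1(\rho)/b_0(s),q_1^{-1}(b_0(\rho)/b_1(s))\}$, $\alpha_0(\rho,s)=\min\{b_0(\rho)/b_1(s),q_0^{-1}(b_1(\rho)/b_0(s))\}$. *)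

From Stdlib Require Import Reals Lra.
Open Scope R_scope.

(* Derivative of g at x relative to the domain D (one-sided at endpoints of D):
   the difference quotient over points y of D, y <> x, tends to l. *)
Definition deriv_within (D : R -> Prop) (g : R -> R) (x l : R) : Prop :=
  forall eps, 0 < eps -> exists delta, 0 < delta /\
    forall y, D y -> y <> x -> Rabs (y - x) < delta ->
      Rabs ((g y - g x) / (y - x) - l) < eps.

Definition convex_pos (g : R -> R) : Prop :=
  forall x y t, 0 < x -> 0 < y -> 0 <= t <= 1 ->
    g (t * x + (1 - t) * y) <= t * g x + (1 - t) * g y.

Definition strictly_convex_pos (g : R -> R) : Prop :=
  forall x y t, 0 < x -> 0 < y -> x <> y -> 0 < t < 1 ->
    g (t * x + (1 - t) * y) < t * g x + (1 - t) * g y.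

Definition is_glb (E : R -> Prop) (m : R) : Prop :=
  (forall x, E x -> m <= x) /\ (forall b, (forall x, E x -> b <= x) -> b <= m).

Definition pos_R (x : R) : Prop := 0 < x.
Definition nonneg_R (x : R) : Prop := 0 <= x.

From Stdlib Require Import Reals Lra Classical.
From Coquelicot Require Coquelicot.
Open Scope R_scope.

(* Write tau = f(r)/f and s = r'/tau, so the claims compare s with alpha_1 and
   alpha_0.  The argument is a barrier argument as rho -> 0:
   - [jacobi_derivative_pos]: mu_+(L) <= 1 forces f' > 0 on [0,L], L = max{lam,1};
     so b0, b1 are positive and f(y) is comparable to y there.
   - [concave_where_slope_large] / [convex_where_slope_small]: where s exceeds
     alpha_1 (resp. falls below alpha_0), the equilibrium equation, through the
     comparison inequalities for phi' and the definition of q1, q0, forces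
     r'' < 0 (resp. r'' > 0); moreover tau' = tau (f'(r) s - f')/f has a sign.
   - [lower_barrier]: hence s' has a sign there and the violation persists on all
     of (0,b] for some b < 1.
   - [log_derivative_blows_up]: on (0,b] one then gets |tau'| >~ 1/rho while tau
     stays bounded (for the lower bound this uses r(0) = 0), impossible.
   The file first develops real analysis relative to a domain (one-sided
   continuity, mean value theorem, barrier and logarithmic blow-up lemmas),
   convexity, the Jacobi field f, the sign of phi' and the sign analysis of the
   equilibrium equation; the comparison argument then takes place in a section
   whose hypotheses are those of the theorem, which follows in a few lines. *)

(** * Elementary real analysis relative to a domain *)

Definition continuous_within (D : R -> Prop) (g : R -> R) (x : R) : Prop :=
  limit1_in g D (g x) x.

Lemma continuous_within_unfold D g x :
  continuous_within D g x <->
  forall eps, 0 < eps -> exists d, 0 < d /\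
    forall y, D y -> Rabs (y - x) < d -> Rabs (g y - g x) < eps.
Proof.
  split.
  - intros H eps He. destruct (H eps He) as [d [Hd Hy]].
    exists d; split; [exact Hd|]. intros y Dy Hyx. exact (Hy y (conj Dy Hyx)).
  - intros H eps He. destruct (H eps He) as [d [Hd Hy]].
    exists d; split; [exact Hd|]. intros y [Dy Hyx]. exact (Hy y Dy Hyx).
Qed.

Lemma continuous_within_weaken (D D' : R -> Prop) g x :
  (forall y, D' y -> D y) -> continuous_within D g x -> continuous_within D' g x.
Proof.
  intros HD H eps He. destruct (H eps He) as [d [Hd Hy]].
  exists d; split; [exact Hd|]. intros y [Dy Hyx]. apply Hy; split; auto.
Qed.

Lemma continuous_within_of_continuity D g x :
  continuity_pt g x -> continuous_within D g x.
Proof.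
  intros H. apply continuous_within_unfold. intros eps He.
  destruct (H eps He) as [d [Hd Hy]]. exists d; split; [exact Hd|].
  intros y _ Hyx. destruct (Req_dec y x) as [->|Hne].
  - unfold Rminus; rewrite Rplus_opp_r, Rabs_R0; exact He.
  - apply (Hy y). split; [split; [exact I|auto]| exact Hyx].
Qed.

Lemma continuous_within_of_deriv D g x l :
  deriv_within D g x l -> continuous_within D g x.
Proof.
  intros H. apply continuous_within_unfold. intros eps He.
  destruct (H 1 Rlt_0_1) as [d [Hd Hq]].
  assert (Hl : 0 < Rabs l + 1) by (pose proof (Rabs_pos l); lra).
  exists (Rmin d (eps / (Rabs l + 1))). split.
  { apply Rmin_pos; [exact Hd| apply Rdiv_lt_0_compat; lra]. }
  intros y Dy Hy. destruct (Req_dec y x) as [->|Hne].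
  { unfold Rminus; rewrite Rplus_opp_r, Rabs_R0; exact He. }
  pose proof (Rmin_l d (eps / (Rabs l + 1))). pose proof (Rmin_r d (eps / (Rabs l + 1))).
  specialize (Hq y Dy Hne ltac:(lra)).
  assert (Hslope : Rabs ((g y - g x) / (y - x)) < Rabs l + 1).
  { pose proof (Rabs_triang ((g y - g x) / (y - x) - l) l) as Ht.
    replace ((g y - g x) / (y - x) - l + l) with ((g y - g x) / (y - x)) in Ht by ring.
    lra. }
  replace (g y - g x) with ((g y - g x) / (y - x) * (y - x)) by (field; lra).
  rewrite Rabs_mult.
  apply Rle_lt_trans with ((Rabs l + 1) * Rabs (y - x)).
  { apply Rmult_le_compat_r; [apply Rabs_pos| lra]. }
  apply Rlt_le_trans with ((Rabs l + 1) * (eps / (Rabs l + 1))).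
  { apply Rmult_lt_compat_l; lra. }
  right; field; lra.
Qed.

Lemma continuous_within_comp D g k x :
  continuous_within D g x -> continuity_pt k (g x) ->
  continuous_within D (fun y => k (g y)) x.
Proof.
  intros Hg Hk. apply continuous_within_unfold. intros eps He.
  destruct (Hk eps He) as [a [Ha Hka]].
  destruct (proj1 (continuous_within_unfold D g x) Hg a Ha) as [d [Hd Hgd]].
  exists d; split; [exact Hd|]. intros y Dy Hy.
  destruct (Req_dec (g y) (g x)) as [E|Hne].
  - rewrite E. unfold Rminus; rewrite Rplus_opp_r, Rabs_R0; exact He.
  - apply (Hka (g y)). split; [split; [exact I| auto]| apply Hgd; auto].
Qed.

Lemma derivable_of_deriv_within D g x l d :
  deriv_within D g x l -> 0 < d -> (forall y, Rabs (y - x) < d -> D y) ->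
  derivable_pt_lim g x l.
Proof.
  intros H Hd HD eps He. destruct (H eps He) as [e [He' Hq]].
  assert (Hp : 0 < Rmin e d) by (apply Rmin_pos; auto).
  exists (mkposreal _ Hp). intros k Hk Hkd. simpl in Hkd.
  pose proof (Rmin_l e d); pose proof (Rmin_r e d).
  pose proof (Hq (x + k)) as Hq'. replace (x + k - x) with k in Hq' by ring.
  apply Hq'.
  - apply HD. replace (x + k - x) with k by ring. lra.
  - intros E. apply Hk. lra.
  - lra.
Qed.

Lemma derivable_pt_lim_local g h x l d : 0 < d -> derivable_pt_lim g x l ->
  (forall y, Rabs (y - x) < d -> h y = g y) -> derivable_pt_lim h x l.
Proof.
  intros Hd H He eps Heps. destruct (H eps Heps) as [e He'].
  assert (Hp : 0 < Rmin e d) by (apply Rmin_pos; [apply cond_pos| auto]).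
  exists (mkposreal _ Hp). intros k Hk Hkd. simpl in Hkd.
  pose proof (Rmin_l e d); pose proof (Rmin_r e d).
  rewrite (He (x + k)), (He x).
  - apply He'; auto; lra.
  - unfold Rminus; rewrite Rplus_opp_r, Rabs_R0; auto.
  - replace (x + k - x) with k by ring; lra.
Qed.

Lemma derivable_pt_lim_continuity g x l : derivable_pt_lim g x l -> continuity_pt g x.
Proof. intros H. apply derivable_continuous_pt. exists l. exact H. Qed.

(* Stdlib's [MVT] phrased with [derivable_pt_lim]; it needs two-sided
   continuity on [a,b], which the clamping trick below removes. *)
Lemma MVT_lim (g g' : R -> R) a b : a < b ->
  (forall x, a < x < b -> derivable_pt_lim g x (g' x)) ->
  (forall x, a <= x <= b -> continuity_pt g x) ->
  exists c, a < c < b /\ g b - g a = g' c * (b - a).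
Proof.
  intros Hab Hd Hc.
  assert (pr1 : forall c, a < c < b -> derivable_pt g c) by (intros c Hc'; exists (g' c); apply Hd; exact Hc').
  assert (pr2 : forall c, a < c < b -> derivable_pt id c) by (intros; apply derivable_pt_id).
  destruct (MVT g id a b pr1 pr2 Hab Hc) as [c [P HP]].
  { intros; apply derivable_continuous_pt, derivable_pt_id. }
  exists c; split; [exact P|].
  rewrite (derive_pt_eq_0 g c (g' c) (pr1 c P) (Hd c P)) in HP.
  rewrite (derive_pt_eq_0 id c 1 (pr2 c P) (derivable_pt_lim_id c)) in HP.
  unfold id in HP. lra.
Qed.

(* Clamping to [a,b]: composing with it turns continuity within [a,b] into
   two-sided continuity without changing the function on [a,b]. *)
Definition clamp (a b y : R) : R := Rmax a (Rmin b y).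

Lemma clamp_range a b y : a <= b -> a <= clamp a b y <= b.
Proof. intros. unfold clamp, Rmax, Rmin. repeat destruct Rle_dec; lra. Qed.

Lemma clamp_id a b y : a <= y <= b -> clamp a b y = y.
Proof. intros. unfold clamp, Rmax, Rmin. repeat destruct Rle_dec; lra. Qed.

Lemma clamp_contracting a b x y : a <= x <= b -> Rabs (clamp a b y - x) <= Rabs (y - x).
Proof.
  intros. unfold clamp, Rmax, Rmin. repeat destruct Rle_dec;
  unfold Rabs; repeat destruct Rcase_abs; lra.
Qed.

Lemma continuity_of_clamped D g a b x : a <= x <= b ->
  (forall y, a <= y <= b -> D y) -> continuous_within D g x ->
  continuity_pt (fun y => g (clamp a b y)) x.
Proof.
  intros Hx HD H eps He.
  destruct (proj1 (continuous_within_unfold D g x) H eps He) as [d [Hd Hb]].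
  exists d. split; [exact Hd|]. intros y [_ Hy]. simpl in *. unfold R_dist in *.
  rewrite (clamp_id a b x Hx). apply Hb.
  - apply HD, clamp_range; lra.
  - eapply Rle_lt_trans; [apply clamp_contracting; exact Hx| exact Hy].
Qed.

Lemma MVT_within (g g' : R -> R) a b : a < b ->
  (forall x, a < x < b -> derivable_pt_lim g x (g' x)) ->
  (forall x, a <= x <= b -> continuous_within (fun y => a <= y <= b) g x) ->
  exists c, a < c < b /\ g b - g a = g' c * (b - a).
Proof.
  intros Hab Hd Hc.
  destruct (MVT_lim (fun y => g (clamp a b y)) g' a b Hab) as [c [Hc1 Hc2]].
  - intros x Hx. apply derivable_pt_lim_local with g (Rmin (x - a) (b - x)).
    + apply Rmin_pos; lra.
    + apply Hd; exact Hx.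
    + intros y Hy. apply Rabs_def2 in Hy.
      pose proof (Rmin_l (x - a) (b - x)); pose proof (Rmin_r (x - a) (b - x)).
      rewrite clamp_id; [reflexivity| lra].
  - intros x Hx. apply continuity_of_clamped with (fun y => a <= y <= b); auto.
  - exists c; split; [exact Hc1|]. rewrite !clamp_id in Hc2; lra.
Qed.

Section DerivativeBounds.
Variables (g g' : R -> R) (a b : R).
Hypothesis Hab : a < b.
Hypothesis Hder : forall x, a < x < b -> derivable_pt_lim g x (g' x).
Hypothesis Hcont : forall x, a <= x <= b -> continuous_within (fun y => a <= y <= b) g x.

Lemma MVT_lower_bound m : (forall x, a < x < b -> m <= g' x) -> m * (b - a) <= g b - g a.
Proof.
  intros Hm. destruct (MVT_within g g' a b Hab Hder Hcont) as [c [Hc ->]].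
  apply Rmult_le_compat_r; [lra| apply Hm; exact Hc].
Qed.

Lemma MVT_upper_bound M : (forall x, a < x < b -> g' x <= M) -> g b - g a <= M * (b - a).
Proof.
  intros HM. destruct (MVT_within g g' a b Hab Hder Hcont) as [c [Hc ->]].
  apply Rmult_le_compat_r; [lra| apply HM; exact Hc].
Qed.

Lemma increasing_of_pos_deriv : (forall x, a < x < b -> 0 < g' x) -> g a < g b.
Proof.
  intros Hp. destruct (MVT_within g g' a b Hab Hder Hcont) as [c [Hc Hmvt]].
  specialize (Hp c Hc). nra.
Qed.

Lemma decreasing_of_neg_deriv : (forall x, a < x < b -> g' x < 0) -> g b < g a.
Proof.
  intros Hn. destruct (MVT_within g g' a b Hab Hder Hcont) as [c [Hc Hmvt]].
  specialize (Hn c Hc). nra.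
Qed.

End DerivativeBounds.

Lemma increase_after_pos_deriv g s l b : derivable_pt_lim g s l -> 0 < l -> s < b ->
  exists t, s < t <= b /\ g s < g t.
Proof.
  intros Hd Hl Hsb. destruct (Hd l Hl) as [del Hdel].
  assert (Hm : 0 < Rmin del (b - s)) by (apply Rmin_pos; [apply cond_pos| lra]).
  pose proof (Rmin_l del (b - s)). pose proof (Rmin_r del (b - s)).
  set (k := Rmin del (b - s) / 2).
  specialize (Hdel k ltac:(unfold k; lra) ltac:(apply Rabs_def1; unfold k; lra)).
  apply Rabs_def2 in Hdel.
  assert (Hq : (g (s + k) - g s) / k * k = g (s + k) - g s) by (field; unfold k; lra).
  exists (s + k). split; [unfold k; lra|].
  assert (0 < k) by (unfold k; lra). nra.
Qed.

Lemma exceeds_before_one g M : continuous_within (fun y => 0 < y <= 1) g 1 -> M < g 1 ->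
  exists y, 0 < y < 1 /\ M < g y.
Proof.
  intros H HM.
  destruct (proj1 (continuous_within_unfold _ g 1) H (g 1 - M) ltac:(lra)) as [d [Hd Hb]].
  assert (0 < Rmin d 1) by (apply Rmin_pos; lra).
  pose proof (Rmin_l d 1). pose proof (Rmin_r d 1).
  exists (1 - Rmin d 1 / 2). split; [lra|].
  assert (Hy : Rabs (1 - Rmin d 1 / 2 - 1) < d) by (apply Rabs_def1; lra).
  specialize (Hb (1 - Rmin d 1 / 2) ltac:(lra) Hy). apply Rabs_def2 in Hb. lra.
Qed.

Lemma upcrossing_point (g : R -> R) x b c : x < b ->
  (forall y, x <= y <= b -> continuity_pt g y) -> g x < c -> c <= g b ->
  exists s, x < s <= b /\ c <= g s /\
    forall d, 0 < d -> exists y, s - d < y < s /\ g y < c.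
Proof.
  intros Hxb Hc Hgx Hgb.
  set (E := fun y => x <= y <= b /\ g y < c).
  destruct (completeness E) as [s [Hub Hleast]].
  { exists b; intros y [Hy _]; lra. }
  { exists x; split; [lra| exact Hgx]. }
  assert (Hxs : x <= s) by (apply Hub; split; [lra| exact Hgx]).
  assert (Hsb : s <= b) by (apply Hleast; intros y [Hy _]; lra).
  assert (Hgs : c <= g s).
  { destruct (Rle_or_lt c (g s)) as [ok|Hlt]; [exact ok|]. exfalso.
    assert (Hsb' : s < b) by (destruct (Req_dec s b) as [E'|]; [rewrite E' in Hlt|]; lra).
    destruct (Hc s ltac:(lra) (c - g s) ltac:(lra)) as [a [Ha Hnear]].
    assert (Hm : 0 < Rmin a (b - s)) by (apply Rmin_pos; lra).
    pose proof (Rmin_l a (b - s)); pose proof (Rmin_r a (b - s)).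
    set (y := s + Rmin a (b - s) / 2).
    assert (Hgy : Rabs (g y - g s) < c - g s).
    { apply (Hnear y). split; [split; [exact I| unfold y; lra]|].
      simpl; unfold R_dist, y. apply Rabs_def1; lra. }
    apply Rabs_def2 in Hgy.
    specialize (Hub y ltac:(split; unfold y in *; lra)). unfold y in Hub. lra. }
  exists s. split; [split; [destruct (Req_dec x s) as [<-|]; lra| exact Hsb]|]. split; [exact Hgs|].
  intros d Hd. destruct (classic (exists y, E y /\ s - d < y)) as [[y [[Hy Hgy] Hyd]]|Hno].
  - exists y. split; [split; [exact Hyd|]| exact Hgy].
    destruct (Req_dec y s) as [->|]; [lra|]. pose proof (Hub y (conj Hy Hgy)). lra.
  - assert (Hub' : is_upper_bound E (s - d)).
    { intros y Ey. destruct (Rle_or_lt y (s - d)) as [ok|Hy]; [exact ok|].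
      exfalso; apply Hno; exists y; split; assumption. }
    specialize (Hleast _ Hub'). lra.
Qed.

Lemma lower_barrier (g g' : R -> R) (b c : R) : 0 < b ->
  (forall x, 0 < x <= b -> derivable_pt_lim g x (g' x)) ->
  (forall x, 0 < x <= b -> c <= g x -> g' x < 0) -> c <= g b ->
  forall x, 0 < x <= b -> c <= g x.
Proof.
  intros Hb Hd Hbad Hgb x Hx.
  destruct (Rle_or_lt c (g x)) as [ok|Hlt]; [exact ok|]. exfalso.
  assert (Hxb : x < b) by (destruct (Req_dec x b) as [E|]; [rewrite E in Hlt|]; lra).
  destruct (upcrossing_point g x b c Hxb) as [s [Hs [Hgs Happroach]]]; try assumption.
  { intros y Hy. apply (derivable_pt_lim_continuity _ _ _ (Hd y ltac:(lra))). }
  (* just left of [s], [g] lies above [g s >= c] since [g' s < 0] *)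
  pose proof (Hbad s ltac:(lra) Hgs) as Hneg.
  destruct (Hd s ltac:(lra) (- g' s) ltac:(lra)) as [del Hdel].
  destruct (Happroach del (cond_pos del)) as [y [Hy Hgy]].
  specialize (Hdel (y - s) ltac:(lra) ltac:(apply Rabs_def1; lra)).
  replace (s + (y - s)) with y in Hdel by ring.
  apply Rabs_def2 in Hdel.
  assert (Hq : (g y - g s) / (y - s) * (y - s) = g y - g s) by (field; lra).
  nra.
Qed.

(* A nonnegative function on (0,b] whose derivative is at least [K/x]
   cannot exist: it would decrease like [K ln x] towards 0. *)
Lemma log_derivative_blows_up (g g' : R -> R) b K : 0 < b -> 0 < K ->
  (forall x, 0 < x <= b -> derivable_pt_lim g x (g' x)) ->
  (forall x, 0 < x <= b -> K / x <= g' x) ->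
  (forall x, 0 < x <= b -> 0 <= g x) -> False.
Proof.
  intros Hb HK Hd Hg' Hg.
  set (t := - (Rabs (g b) + 1) / K).
  assert (Kt : K * t = - (Rabs (g b) + 1)) by (unfold t; field; lra).
  assert (Ht : t < 0) by (pose proof (Rabs_pos (g b)); nra).
  set (x0 := b * exp t).
  assert (He : exp t < 1) by (rewrite <- exp_0; apply exp_increasing; exact Ht).
  assert (Hx0 : 0 < x0) by (apply Rmult_lt_0_compat; [exact Hb| apply exp_pos]).
  assert (Hx0b : x0 < b) by (unfold x0; pose proof (exp_pos t); nra).
  assert (Hlog : ln x0 = ln b + t) by (unfold x0; rewrite ln_mult, ln_exp; [reflexivity| exact Hb| apply exp_pos]).
  assert (Hinc : 0 * (b - x0) <= (g b - K * ln b) - (g x0 - K * ln x0)).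
  { apply (MVT_lower_bound (fun x => g x - K * ln x) (fun x => g' x - K * / x)); [exact Hx0b| | |].
    - intros x Hx. apply derivable_pt_lim_minus; [apply Hd; lra|].
      replace (K * / x) with (0 * ln x + K * / x) by ring.
      apply (derivable_pt_lim_mult (fun _ => K) ln);
        [apply derivable_pt_lim_const| apply derivable_pt_lim_ln; lra].
    - intros x Hx. apply continuous_within_of_continuity, continuity_pt_minus.
      + apply (derivable_pt_lim_continuity _ _ _ (Hd x ltac:(lra))).
      + apply continuity_pt_mult; [apply continuity_pt_const; intros ? ?; reflexivity|].
        apply (derivable_pt_lim_continuity _ _ _ (derivable_pt_lim_ln x ltac:(lra))).
    - intros x Hx. specialize (Hg' x ltac:(lra)). unfold Rdiv in Hg'. lra. }
  rewrite Hlog in Hinc. pose proof (Rle_abs (g b)). specialize (Hg x0 ltac:(lra)). nra.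
Qed.

Lemma right_limit_lower_bound (g : R -> R) (D : R -> Prop) l x m : 0 < x ->
  (forall y, 0 < y < x -> D y) -> limit1_in g D l 0 ->
  (forall e, 0 < e < x -> m * (x - e) <= g x - g e) -> l + m * x <= g x.
Proof.
  intros Hx HD Hl He.
  destruct (Rle_or_lt (l + m * x) (g x)) as [ok|Hlt]; [exact ok|]. exfalso.
  set (gap := l + m * x - g x).
  assert (Hm : 0 < Rabs m + 1) by (pose proof (Rabs_pos m); lra).
  destruct (Hl (gap / 2) ltac:(unfold gap; lra)) as [a [Ha Hnear]].
  set (w := Rmin (Rmin a x) (gap / (4 * (Rabs m + 1)))).
  assert (Hw : 0 < w) by (repeat apply Rmin_pos; unfold gap; try apply Rdiv_lt_0_compat; lra).
  assert (Hwa : w <= Rmin a x) by apply Rmin_l.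
  assert (Hwg : w <= gap / (4 * (Rabs m + 1))) by apply Rmin_r.
  pose proof (Rmin_l a x). pose proof (Rmin_r a x).
  set (e := w / 2).
  assert (Hge : Rabs (g e - l) < gap / 2).
  { apply (Hnear e). split; [apply HD; unfold e; lra|].
    simpl; unfold R_dist. rewrite Rminus_0_r. apply Rabs_def1; unfold e; lra. }
  apply Rabs_def2 in Hge.
  specialize (He e ltac:(unfold e; lra)).
  assert (Hme : m * e <= gap / 4).
  { assert (Habs : m * e <= Rabs m * e) by (pose proof (Rle_abs m); unfold e; nra).
    assert (Hbound : (Rabs m + 1) * e <= (Rabs m + 1) * (gap / (4 * (Rabs m + 1))))
      by (apply Rmult_le_compat_l; unfold e; lra).
    replace ((Rabs m + 1) * (gap / (4 * (Rabs m + 1)))) with (gap / 4) in Hbound by (field; lra).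
    assert (0 <= e) by (unfold e; lra). nra. }
  unfold gap in *. lra.
Qed.

(** * Convexity on (0,oo) *)

Lemma strictly_convex_convex g : strictly_convex_pos g -> convex_pos g.
Proof.
  intros H x y t Hx Hy Ht.
  destruct (Req_dec x y) as [<-|Hne].
  { replace (t * x + (1 - t) * x) with x by ring. right; ring. }
  destruct (Req_dec t 0) as [->|Ht0].
  { replace (0 * x + (1 - 0) * y) with y by ring. right; ring. }
  destruct (Req_dec t 1) as [->|Ht1].
  { replace (1 * x + (1 - 1) * y) with x by ring. right; ring. }
  left; apply H; auto; lra.
Qed.

Lemma convex_slope_left g g' x y : convex_pos g -> 0 < x < y ->
  deriv_within pos_R g x (g' x) -> g' x <= (g y - g x) / (y - x).
Proof.
  intros Hc Hxy Hd. set (S := (g y - g x) / (y - x)).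
  assert (HS : S * (y - x) = g y - g x) by (unfold S; field; lra).
  destruct (Rle_or_lt (g' x) S) as [ok|Hlt]; [exact ok|]. exfalso.
  destruct (Hd (g' x - S) ltac:(lra)) as [d [Hd0 Hq]].
  assert (Hm : 0 < Rmin d (y - x)) by (apply Rmin_pos; lra).
  pose proof (Rmin_l d (y - x)). pose proof (Rmin_r d (y - x)).
  (* a point [z] just right of [x], written as a convex combination of [x] and [y] *)
  set (z := x + Rmin d (y - x) / 2).
  set (t := (y - z) / (y - x)).
  assert (Hz : t * x + (1 - t) * y = z) by (unfold t; field; lra).
  assert (Hzx : z - x = (1 - t) * (y - x)) by (unfold t; field; lra).
  assert (Ht : 0 <= t <= 1).
  { assert (Ht' : t * (y - x) = y - z) by (unfold t; field; lra). unfold z in *. nra. }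
  pose proof (Hc x y t ltac:(lra) ltac:(lra) Ht) as Hcv. rewrite Hz in Hcv.
  specialize (Hq z ltac:(unfold pos_R, z; lra) ltac:(unfold z; lra)
                ltac:(apply Rabs_def1; unfold z; lra)).
  apply Rabs_def2 in Hq.
  assert (Hqe : (g z - g x) / (z - x) * (z - x) = g z - g x) by (field; unfold z; lra).
  assert (Hchord : g z - g x <= S * (z - x)) by (rewrite Hzx; nra).
  assert (0 < z - x) by (unfold z; lra).
  nra.
Qed.

Lemma convex_slope_right g g' x y : convex_pos g -> 0 < x < y ->
  deriv_within pos_R g y (g' y) -> (g y - g x) / (y - x) <= g' y.
Proof.
  intros Hc Hxy Hd. set (S := (g y - g x) / (y - x)).
  assert (HS : S * (y - x) = g y - g x) by (unfold S; field; lra).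
  destruct (Rle_or_lt S (g' y)) as [ok|Hlt]; [exact ok|]. exfalso.
  destruct (Hd (S - g' y) ltac:(lra)) as [d [Hd0 Hq]].
  assert (Hm : 0 < Rmin d (y - x)) by (apply Rmin_pos; lra).
  pose proof (Rmin_l d (y - x)). pose proof (Rmin_r d (y - x)).
  set (z := y - Rmin d (y - x) / 2).
  set (t := (y - z) / (y - x)).
  assert (Hz : t * x + (1 - t) * y = z) by (unfold t; field; lra).
  assert (Hyz : y - z = t * (y - x)) by (unfold t; field; lra).
  assert (Ht : 0 <= t <= 1).
  { assert (Ht' : t * (y - x) = y - z) by (unfold t; field; lra). unfold z in *. nra. }
  pose proof (Hc x y t ltac:(lra) ltac:(lra) Ht) as Hcv. rewrite Hz in Hcv.
  specialize (Hq z ltac:(unfold pos_R, z; lra) ltac:(unfold z; lra)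
                ltac:(apply Rabs_def1; unfold z; lra)).
  apply Rabs_def2 in Hq.
  assert (Hqe : (g z - g y) / (z - y) * (y - z) = g y - g z) by (field; unfold z; lra).
  assert (Hchord : S * (y - z) <= g y - g z) by (rewrite Hyz; nra).
  assert (0 < y - z) by (unfold z; lra).
  nra.
Qed.

Lemma convex_second_derivative_nonneg g g' g'' v : convex_pos g ->
  (forall x, 0 < x -> deriv_within pos_R g x (g' x)) ->
  0 < v -> deriv_within pos_R g' v (g'' v) -> 0 <= g'' v.
Proof.
  intros Hc Hg Hv Hd.
  destruct (Rle_or_lt 0 (g'' v)) as [ok|Hlt]; [exact ok|]. exfalso.
  destruct (Hd (- g'' v) ltac:(lra)) as [d [Hd0 Hq]].
  set (y := v + d / 2).
  assert (Hmono : g' v <= g' y).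
  { pose proof (convex_slope_left g g' v y Hc ltac:(unfold y; lra) (Hg v Hv)).
    pose proof (convex_slope_right g g' v y Hc ltac:(unfold y; lra) (Hg y ltac:(unfold y; lra))).
    lra. }
  specialize (Hq y ltac:(unfold pos_R, y; lra) ltac:(unfold y; lra)
                ltac:(apply Rabs_def1; unfold y; lra)).
  assert (0 <= (g' y - g' v) / (y - v)).
  { apply Rmult_le_pos; [lra| left; apply Rinv_0_lt_compat; unfold y; lra]. }
  apply Rabs_def2 in Hq. lra.
Qed.

(** * Functions continuous on [0,oo) *)

Lemma Rmax0_continuous s : continuity_pt (fun y => Rmax y 0) s.
Proof.
  intros eps He. exists eps. split; [exact He|]. intros y [_ Hy]. simpl in *.
  unfold R_dist in *. eapply Rle_lt_trans; [| exact Hy].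
  unfold Rmax; repeat destruct Rle_dec; unfold Rabs; repeat destruct Rcase_abs; lra.
Qed.

Lemma nonneg_extension_continuous g :
  (forall x, 0 <= x -> continuous_within nonneg_R g x) ->
  forall s, continuity_pt (fun y => g (Rmax 0 y)) s.
Proof.
  intros Hg s eps He. destruct (Rle_or_lt 0 s) as [Hs|Hs].
  - destruct (proj1 (continuous_within_unfold _ g s) (Hg s Hs) eps He) as [d [Hd Hb]].
    exists d; split; [exact Hd|]. intros y [_ Hy]. simpl in *. unfold R_dist in *.
    rewrite (Rmax_right 0 s Hs). apply Hb; [apply Rmax_l|].
    eapply Rle_lt_trans; [| exact Hy].
    unfold Rmax; destruct Rle_dec; unfold Rabs; repeat destruct Rcase_abs; lra.
  - exists (- s). split; [lra|]. intros y [_ Hy]. simpl in *. unfold R_dist in *.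
    apply Rabs_def2 in Hy.
    rewrite (Rmax_left 0 y), (Rmax_left 0 s) by lra.
    unfold Rminus; rewrite Rplus_opp_r, Rabs_R0; exact He.
Qed.

Lemma positive_glb_on_compact g b m : 0 <= b ->
  (forall x, 0 <= x -> continuous_within nonneg_R g x) ->
  (forall x, 0 <= x <= b -> 0 < g x) ->
  is_glb (fun y => exists x, 0 <= x <= b /\ y = g x) m -> 0 < m.
Proof.
  intros Hb Hc Hpos [_ Hgreatest].
  destruct (continuity_ab_min (fun y => g (Rmax 0 y)) 0 b Hb
              (fun c _ => nonneg_extension_continuous g Hc c)) as [xm [Hmin Hxm]].
  rewrite (Rmax_right 0 xm) in Hmin by lra.
  apply Rlt_le_trans with (g xm); [apply Hpos; exact Hxm|].
  apply Hgreatest. intros y [x [Hx ->]].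
  specialize (Hmin x Hx). rewrite (Rmax_right 0 x) in Hmin by lra. exact Hmin.
Qed.

Lemma first_nonpositive_point g x1 : 0 <= x1 ->
  (forall x, 0 <= x -> continuous_within nonneg_R g x) -> 0 < g 0 -> g x1 <= 0 ->
  exists xs, 0 < xs <= x1 /\ g xs <= 0 /\ forall z, 0 <= z < xs -> 0 < g z.
Proof.
  intros Hx1 Hc Hg0 Hgx1.
  set (S := fun y => 0 <= y <= x1 /\ forall z, 0 <= z <= y -> 0 < g z).
  assert (HS0 : S 0) by (split; [lra| intros z Hz; replace z with 0 by lra; exact Hg0]).
  destruct (completeness S) as [xs [Hub Hleast]].
  { exists x1; intros y [Hy _]; lra. }
  { exists 0; exact HS0. }
  assert (Hxs0 : 0 <= xs) by (apply Hub, HS0).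
  assert (Hxsx1 : xs <= x1) by (apply Hleast; intros y [Hy _]; lra).
  assert (Hbelow : forall z, 0 <= z < xs -> 0 < g z).
  { intros z Hz. destruct (classic (exists y, S y /\ z < y)) as [[y [[_ Hy] Hzy]]|Hno].
    - apply Hy; lra.
    - assert (Hz' : is_upper_bound S z).
      { intros y Sy. destruct (Rle_or_lt y z) as [ok|Hlt]; [exact ok|].
        exfalso; apply Hno; exists y; split; assumption. }
      specialize (Hleast z Hz'). lra. }
  assert (Hgxs : g xs <= 0).
  { destruct (Rle_or_lt (g xs) 0) as [ok|Hp]; [exact ok|]. exfalso.
    assert (Hne : xs < x1) by (destruct (Req_dec xs x1) as [E|]; [rewrite E in Hp|]; lra).
    destruct (proj1 (continuous_within_unfold _ g xs) (Hc xs Hxs0) (g xs) Hp) as [d [Hd Hnear]].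
    assert (0 < Rmin d (x1 - xs)) by (apply Rmin_pos; lra).
    pose proof (Rmin_l d (x1 - xs)). pose proof (Rmin_r d (x1 - xs)).
    set (y := xs + Rmin d (x1 - xs) / 2).
    assert (Sy : S y).
    { split; [unfold y; lra|]. intros z Hz.
      destruct (Rlt_or_le z xs) as [Hz'|Hz']; [apply Hbelow; lra|].
      assert (Hgz : Rabs (g z - g xs) < g xs)
        by (apply Hnear; [unfold nonneg_R; lra| apply Rabs_def1; unfold y in Hz; lra]).
      apply Rabs_def2 in Hgz. lra. }
    specialize (Hub y Sy). unfold y in Hub. lra. }
  exists xs. split; [|split; assumption].
  split; [| exact Hxsx1].
  destruct (Req_dec xs 0) as [E|]; [rewrite E in Hgxs; lra| lra].
Qed.

(** * The Jacobi field [f]: positivity of [f'] under the curvature bound *)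

(* The integrand [s kappa_+(s)] of [mu_+], extended continuously to all of R. *)
Definition kappa_plus_density (kappa : R -> R) (y : R) : R :=
  y * Rmax (kappa (Rmax 0 y)) 0.

Lemma kappa_plus_density_nonneg kappa y : 0 <= y -> 0 <= kappa_plus_density kappa y.
Proof. intros Hy. unfold kappa_plus_density. apply Rmult_le_pos; [exact Hy| apply Rmax_r]. Qed.

Lemma kappa_plus_density_zero kappa y : 0 <= y -> kappa y <= 0 -> kappa_plus_density kappa y = 0.
Proof.
  intros Hy Hk. unfold kappa_plus_density.
  rewrite (Rmax_right 0 y), (Rmax_right (kappa y) 0) by lra. ring.
Qed.

Section KappaPlusPrimitive.
Import Coquelicot.Coquelicot.

Lemma kappa_plus_primitive kappa L :
  (forall x, 0 <= x -> continuous_within nonneg_R kappa x) -> 0 < L ->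
  (forall pr : Riemann_integrable (fun s => s * Rmax (kappa s) 0) 0 L, RiemannInt pr <= 1) ->
  exists P, (forall s, derivable_pt_lim P s (kappa_plus_density kappa s)) /\
            P 0 = 0 /\ P L <= 1.
Proof.
  intros Hk HL Hmu. set (pc := kappa_plus_density kappa).
  assert (Hpc : forall s, continuity_pt pc s).
  { intros s. apply (continuity_pt_mult (fun y => y) (fun y => Rmax (kappa (Rmax 0 y)) 0)).
    - apply derivable_continuous_pt, derivable_pt_id.
    - apply (continuity_pt_comp (fun y => kappa (Rmax 0 y)) (fun y => Rmax y 0)).
      + apply nonneg_extension_continuous; exact Hk.
      + apply Rmax0_continuous. }
  assert (Hex : forall a b, ex_RInt pc a b).
  { intros a b. apply (@ex_RInt_continuous R_CompleteNormedModule).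
    intros z _. apply continuity_pt_filterlim, Hpc. }
  exists (fun s => RInt pc 0 s). split; [|split].
  - intros s. apply is_derive_Reals.
    apply (@is_derive_RInt R_CompleteNormedModule pc _ 0 s).
    + apply filter_forall. intros b.
      apply (@RInt_correct R_CompleteNormedModule), Hex.
    + apply continuity_pt_filterlim, Hpc.
  - rewrite RInt_point; reflexivity.
  - assert (He : forall x, Rmin 0 L < x < Rmax 0 L -> pc x = x * Rmax (kappa x) 0).
    { intros x Hx. unfold pc, kappa_plus_density.
      rewrite Rmin_left, Rmax_right in Hx by lra. rewrite (Rmax_right 0 x) by lra. reflexivity. }
    pose proof (@ex_RInt_ext R_CompleteNormedModule _ _ 0 L He (Hex 0 L)) as Hex'.
    specialize (Hmu (ex_RInt_Reals_0 _ _ _ Hex')).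
    rewrite <- RInt_Reals in Hmu.
    rewrite (@RInt_ext R_CompleteNormedModule _ _ 0 L He). exact Hmu.
Qed.

End KappaPlusPrimitive.

Section JacobiField.
Variables (kappa f df : R -> R).
Hypothesis hkappa : forall x, 0 <= x -> continuous_within nonneg_R kappa x.
Hypothesis hf : forall x, 0 <= x -> deriv_within nonneg_R f x (df x).
Hypothesis hdf : forall x, 0 <= x -> deriv_within nonneg_R df x (- kappa x * f x).
Hypothesis hf0 : f 0 = 0.
Hypothesis hdf0 : df 0 = 1.

Lemma f_derivable x : 0 < x -> derivable_pt_lim f x (df x).
Proof.
  intros Hx. apply (derivable_of_deriv_within nonneg_R f x (df x) x); [apply hf; lra| lra|].
  intros y Hy. apply Rabs_def2 in Hy. unfold nonneg_R. lra.
Qed.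

Lemma df_derivable x : 0 < x -> derivable_pt_lim df x (- kappa x * f x).
Proof.
  intros Hx. apply (derivable_of_deriv_within nonneg_R df x _ x); [apply hdf; lra| lra|].
  intros y Hy. apply Rabs_def2 in Hy. unfold nonneg_R. lra.
Qed.

Lemma f_continuous_on a b x : 0 <= a -> a <= x <= b ->
  continuous_within (fun y => a <= y <= b) f x.
Proof.
  intros Ha Hx. apply continuous_within_weaken with nonneg_R; [unfold nonneg_R; intros; lra|].
  apply continuous_within_of_deriv with (df x). apply hf. lra.
Qed.

Lemma f_increasing_before xs : 0 < xs -> (forall z, 0 <= z < xs -> 0 < df z) ->
  forall s, 0 <= s < xs -> 0 <= f s < f xs.
Proof.
  intros Hxs Hpos s Hs.
  assert (Hinc : forall a b, 0 <= a < b -> b <= xs -> f a < f b).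
  { intros a b Hab Hb. apply (increasing_of_pos_deriv f df a b); [lra| | |].
    - intros x Hx. apply f_derivable. lra.
    - intros x Hx. apply f_continuous_on; lra.
    - intros x Hx. apply Hpos. lra. }
  split; [| apply Hinc; lra].
  destruct (Req_dec s 0) as [->|Hs0]; [lra|].
  rewrite <- hf0. left. apply Hinc; lra.
Qed.

(* The comparison function [G s = s f'(s) - f(s) + f(xs) P(s)]: its
   derivative is [s (f(xs) kappa_+(s) - kappa(s) f(s))], which is nonnegative
   on [0,xs] when [f <= f(xs)] there. *)
Let comparison (P : R -> R) (xs s : R) : R := s * df s - f s + f xs * P s.

Lemma comparison_derivative P xs s : 0 < s ->
  (forall s, derivable_pt_lim P s (kappa_plus_density kappa s)) ->
  derivable_pt_lim (comparison P xs) s (s * (f xs * Rmax (kappa s) 0 - kappa s * f s)).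
Proof.
  intros Hs HP. unfold comparison.
  replace (s * (f xs * Rmax (kappa s) 0 - kappa s * f s))
    with ((1 * df s + s * (- kappa s * f s) - df s) + (0 * P s + f xs * kappa_plus_density kappa s))
    by (unfold kappa_plus_density; rewrite (Rmax_right 0 s) by lra; ring).
  apply (derivable_pt_lim_plus (fun s => s * df s - f s) (fun s => f xs * P s)).
  - apply (derivable_pt_lim_minus (fun s => s * df s) f); [| apply f_derivable; exact Hs].
    apply (derivable_pt_lim_mult (fun s => s) df);
      [apply derivable_pt_lim_id| apply df_derivable; exact Hs].
  - apply (derivable_pt_lim_mult (fun _ => f xs) P); [apply derivable_pt_lim_const| apply HP].
Qed.

Lemma comparison_continuous P xs a b x :
  (forall s, derivable_pt_lim P s (kappa_plus_density kappa s)) -> 0 <= a -> a <= x <= b ->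
  continuous_within (fun y => a <= y <= b) (comparison P xs) x.
Proof.
  intros HP Ha Hx. unfold comparison, continuous_within.
  apply (limit_plus (fun s => s * df s - f s) (fun s => f xs * P s)).
  - apply (limit_minus (fun s => s * df s) f); [apply (limit_mul (fun s => s) df)|].
    + apply lim_x.
    + apply (continuous_within_weaken nonneg_R); [unfold nonneg_R; intros; lra|].
      apply continuous_within_of_deriv with (- kappa x * f x). apply hdf. lra.
    + apply f_continuous_on; lra.
  - apply (limit_mul (fun _ => f xs) P); [apply (limit_free (fun _ => f xs) _ 0)|].
    apply continuous_within_of_continuity, (derivable_pt_lim_continuity _ _ _ (HP x)).
Qed.

Lemma comparison_nondecreasing P xs :
  (forall s, derivable_pt_lim P s (kappa_plus_density kappa s)) ->
  0 < xs -> (forall z, 0 <= z < xs -> 0 < df z) ->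
  forall a b, 0 <= a < b -> b <= xs -> comparison P xs a <= comparison P xs b.
Proof.
  intros HP Hxs Hpos a b Hab Hb.
  assert (0 * (b - a) <= comparison P xs b - comparison P xs a); [|lra].
  apply (MVT_lower_bound (comparison P xs) (fun s => s * (f xs * Rmax (kappa s) 0 - kappa s * f s)));
    [lra| | |].
  - intros x Hx. apply comparison_derivative; [lra| exact HP].
  - intros x Hx. apply comparison_continuous; [exact HP| lra| exact Hx].
  - intros x Hx. destruct (f_increasing_before xs Hxs Hpos x ltac:(lra)) as [Hfx Hfxs].
    assert (kappa x * f x <= Rmax (kappa x) 0 * f x) by (apply Rmult_le_compat_r; [lra| apply Rmax_l]).
    assert (0 <= Rmax (kappa x) 0 * (f xs - f x)) by (apply Rmult_le_pos; [apply Rmax_r| lra]).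
    nra.
Qed.

(* If [f'] had a first zero [xs], the comparison function would force
   [P(xs) > 1] for the primitive [P] of [s kappa_+(s)], contradicting
   [mu_+ <= 1]; if [kappa <= 0] on (0,xs) it would instead force [f(xs) <= 0]. *)
Lemma no_first_zero P xs :
  (forall s, derivable_pt_lim P s (kappa_plus_density kappa s)) -> P 0 = 0 -> P xs <= 1 ->
  0 < xs -> df xs <= 0 -> (forall z, 0 <= z < xs -> 0 < df z) -> False.
Proof.
  intros HP HP0 HP1 Hxs Hdfxs Hpos.
  pose proof (f_increasing_before xs Hxs Hpos) as Hf.
  pose proof (comparison_nondecreasing P xs HP Hxs Hpos) as HGmono.
  assert (Hfxs : 0 < f xs) by (pose proof (Hf (xs / 2) ltac:(lra)); lra).
  assert (HG0 : comparison P xs 0 = 0) by (unfold comparison; rewrite HP0, hf0; ring).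
  assert (HGxs : comparison P xs xs = xs * df xs - f xs + f xs * P xs) by reflexivity.
  destruct (classic (exists s1, 0 < s1 < xs /\ 0 < kappa s1)) as [[s1 [Hs1 Hks1]]|Hnok].
  - (* the comparison function increases strictly at [s1] *)
    destruct (Hf s1 ltac:(lra)) as [Hfs1 Hfs1xs].
    assert (HG's1 : 0 < s1 * (f xs * Rmax (kappa s1) 0 - kappa s1 * f s1))
      by (rewrite Rmax_left by lra; apply Rmult_lt_0_compat; nra).
    destruct (increase_after_pos_deriv (comparison P xs) s1 _ xs
                (comparison_derivative P xs s1 ltac:(lra) HP) HG's1 ltac:(lra)) as [t [Ht HGt]].
    assert (comparison P xs 0 <= comparison P xs s1) by (apply HGmono; lra).
    assert (comparison P xs t <= comparison P xs xs)
      by (destruct (Req_dec t xs) as [->|]; [lra| apply HGmono; lra]).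
    nra.
  - (* [kappa <= 0] on (0,xs), so [P xs = 0] *)
    assert (HPcont : forall x, 0 <= x <= xs -> continuous_within (fun y => 0 <= y <= xs) P x)
      by (intros x Hx; apply continuous_within_of_continuity, (derivable_pt_lim_continuity _ _ _ (HP x))).
    assert (HPxs : P xs - P 0 <= 0 * (xs - 0)).
    { apply (MVT_upper_bound P (kappa_plus_density kappa)); [lra| intros; apply HP| exact HPcont|].
      intros x Hx. rewrite kappa_plus_density_zero; [lra| lra|].
      destruct (Rle_or_lt (kappa x) 0) as [ok|Hk]; [exact ok|].
      exfalso; apply Hnok; exists x; split; assumption. }
    assert (HPnn : 0 * (xs - 0) <= P xs - P 0).
    { apply (MVT_lower_bound P (kappa_plus_density kappa)); [lra| intros; apply HP| exact HPcont|].
      intros x Hx. apply kappa_plus_density_nonneg. lra. }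
    assert (comparison P xs 0 <= comparison P xs xs) by (apply HGmono; lra).
    nra.
Qed.

(* If [mu_+(L) <= 1] then [f' > 0] on [0,L]: otherwise [f'] would have a first
   zero in (0,L], which [no_first_zero] excludes. *)
Theorem jacobi_derivative_pos L : 0 < L ->
  (forall pr : Riemann_integrable (fun s => s * Rmax (kappa s) 0) 0 L, RiemannInt pr <= 1) ->
  forall x, 0 <= x <= L -> 0 < df x.
Proof.
  intros HL Hmu x1 Hx1.
  destruct (Rlt_or_le 0 (df x1)) as [ok|Hbad]; [exact ok|]. exfalso.
  destruct (kappa_plus_primitive kappa L hkappa HL Hmu) as [P [HP [HP0 HPL]]].
  assert (Hdfc : forall x, 0 <= x -> continuous_within nonneg_R df x).
  { intros x Hx. apply continuous_within_of_deriv with (- kappa x * f x). apply hdf. exact Hx. }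
  destruct (first_nonpositive_point df x1 ltac:(lra) Hdfc ltac:(lra) Hbad)
    as [xs [Hxs [Hdfxs Hpos]]].
  apply (no_first_zero P xs HP HP0); [| lra| exact Hdfxs| exact Hpos].
  assert (0 * (L - xs) <= P L - P xs); [|lra].
  destruct (Req_dec xs L) as [->|Hne]; [lra|].
  apply (MVT_lower_bound P (kappa_plus_density kappa)); [lra| intros; apply HP| |].
  - intros x Hx. apply continuous_within_of_continuity, (derivable_pt_lim_continuity _ _ _ (HP x)).
  - intros x Hx. apply kappa_plus_density_nonneg. lra.
Qed.

End JacobiField.

(** * The integrand [phi]: sign of [phi'] and the comparison inequalities *)

Lemma increasing_sign_change (psi : R -> R) t0 : 0 <= t0 ->
  (forall v w, 0 < v -> v < w -> psi v < psi w) ->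
  (forall eps, 0 < eps -> exists d, 0 < d /\
     forall w, 0 < w -> Rabs (w - t0) < d -> Rabs (psi w) < eps) ->
  (forall v, t0 < v -> 0 < psi v) /\ (forall v, 0 < v <= t0 -> psi v <= 0).
Proof.
  intros Ht0 Hinc Hlim. split.
  - intros v Hv. set (u := (t0 + v) / 2).
    assert (Hu : 0 <= psi u).
    { destruct (Rle_or_lt 0 (psi u)) as [ok|Hlt]; [exact ok|]. exfalso.
      destruct (Hlim (- psi u) ltac:(lra)) as [d [Hd Hnear]].
      assert (0 < Rmin d (u - t0)) by (apply Rmin_pos; unfold u; lra).
      pose proof (Rmin_l d (u - t0)). pose proof (Rmin_r d (u - t0)).
      set (w := t0 + Rmin d (u - t0) / 2).
      specialize (Hnear w ltac:(unfold w; lra) ltac:(apply Rabs_def1; unfold w; lra)).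
      specialize (Hinc w u ltac:(unfold w; lra) ltac:(unfold w; lra)).
      apply Rabs_def2 in Hnear. lra. }
    specialize (Hinc u v ltac:(unfold u; lra) ltac:(unfold u; lra)). lra.
  - intros v Hv. destruct (Rle_or_lt (psi v) 0) as [ok|Hlt]; [exact ok|]. exfalso.
    destruct (Hlim (psi v) Hlt) as [d [Hd Hnear]].
    set (w := t0 + d / 2).
    specialize (Hnear w ltac:(unfold w; lra) ltac:(apply Rabs_def1; unfold w; lra)).
    specialize (Hinc v w ltac:(lra) ltac:(unfold w; lra)).
    apply Rabs_def2 in Hnear. lra.
Qed.

Section PhiDerivative.
Variables (dphi : R -> R) (t0 : R).
Hypothesis ht0 : 0 <= t0.
Hypothesis ht0phi : limit1_in dphi pos_R 0 t0.
Hypothesis hA5 : forall v w, 0 < v -> v < w -> v * dphi v < w * dphi w.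

Lemma weighted_dphi_limit : forall eps, 0 < eps -> exists d, 0 < d /\
  forall w, 0 < w -> Rabs (w - t0) < d -> Rabs (w * dphi w) < eps.
Proof.
  intros eps He.
  destruct (ht0phi (eps / (t0 + 2))) as [a [Ha Hnear]]; [apply Rdiv_lt_0_compat; lra|].
  exists (Rmin a 1). split; [apply Rmin_pos; lra|].
  intros w Hw Hd. pose proof (Rmin_l a 1). pose proof (Rmin_r a 1).
  assert (Hdw : Rabs (dphi w - 0) < eps / (t0 + 2)) by (apply (Hnear w); split; [exact Hw| simpl; unfold R_dist; lra]).
  rewrite Rminus_0_r in Hdw. apply Rabs_def2 in Hd.
  rewrite Rabs_mult, (Rabs_right w) by lra.
  apply Rle_lt_trans with ((t0 + 2) * Rabs (dphi w)).
  { apply Rmult_le_compat_r; [apply Rabs_pos| lra]. }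
  apply Rlt_le_trans with ((t0 + 2) * (eps / (t0 + 2))); [apply Rmult_lt_compat_l; lra|].
  right; field; lra.
Qed.

Lemma dphi_sign : (forall v, t0 < v -> 0 < dphi v) /\ (forall v, 0 < v <= t0 -> dphi v <= 0).
Proof.
  destruct (increasing_sign_change (fun v => v * dphi v) t0 ht0 hA5 weighted_dphi_limit)
    as [Hpos Hnpos].
  split.
  - intros v Hv. specialize (Hpos v Hv). destruct (Rle_or_lt (dphi v) 0); [nra| assumption].
  - intros v Hv. specialize (Hnpos v Hv). nra.
Qed.

(* The key inequality behind the upper bound: if [r' = s tau] with [s > 1]
   exceeding [q1^{-1}(y)] (encoded as [q1 s < y]) and [y f'(r) <= f'(rho) < s f'(r)],
   then [f'(r) phi'(tau) - f'(rho) phi'(r') < 0]. *)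
Lemma phi_comparison_above (tau s dfr dfx y q1s : R) :
  0 < tau -> 1 < s -> 0 < dfr -> 0 < dfx -> dfx < dfr * s ->
  (t0 < tau -> dphi tau <= q1s * dphi (s * tau)) -> q1s < y -> y * dfr <= dfx ->
  dfr * dphi tau - dfx * dphi (s * tau) < 0.
Proof.
  intros Htau Hs Hdfr Hdfx Hgap Hq1 Hq1y Hy.
  destruct dphi_sign as [Hpos Hnpos].
  assert (Hmono : tau * dphi tau < (s * tau) * dphi (s * tau)) by (apply hA5; nra).
  assert (Hd : dphi tau < s * dphi (s * tau)) by nra.
  assert (H1 : dfr * dphi tau < dfr * (s * dphi (s * tau))) by (apply Rmult_lt_compat_l; lra).
  destruct (Rle_or_lt (dphi (s * tau)) 0) as [Hn|Hp].
  { assert (0 <= (dfr * s - dfx) * - dphi (s * tau)) by (apply Rmult_le_pos; lra). nra. }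
  destruct (Rle_or_lt tau t0) as [Hle|Hgt].
  - pose proof (Hnpos tau ltac:(lra)).
    assert (dfr * dphi tau <= 0) by nra. assert (0 < dfx * dphi (s * tau)) by nra. lra.
  - specialize (Hq1 Hgt).
    assert (H2 : dfr * dphi tau <= dfr * (q1s * dphi (s * tau))) by (apply Rmult_le_compat_l; lra).
    assert (H3 : 0 < (y - q1s) * (dfr * dphi (s * tau))) by (apply Rmult_lt_0_compat; nra).
    assert (H4 : y * dfr * dphi (s * tau) <= dfx * dphi (s * tau)) by (apply Rmult_le_compat_r; lra).
    nra.
Qed.

Lemma phi_comparison_below (tau s dfr dfx y q0s : R) :
  0 < tau -> 0 < s < 1 -> 0 < dfr -> dfr * s < dfx ->
  (t0 < s * tau -> q0s * dphi (s * tau) <= dphi tau) -> y < q0s -> dfx <= y * dfr ->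
  0 < dfr * dphi tau - dfx * dphi (s * tau).
Proof.
  intros Htau Hs Hdfr Hgap Hq0 Hq0y Hy.
  destruct dphi_sign as [Hpos Hnpos].
  assert (Hmono : (s * tau) * dphi (s * tau) < tau * dphi tau) by (apply hA5; nra).
  assert (Hd : s * dphi (s * tau) < dphi tau) by nra.
  assert (H1 : dfr * (s * dphi (s * tau)) < dfr * dphi tau) by (apply Rmult_lt_compat_l; lra).
  destruct (Rle_or_lt (dphi (s * tau)) 0) as [Hn|Hp].
  { assert (0 <= (dfx - dfr * s) * - dphi (s * tau)) by (apply Rmult_le_pos; lra). nra. }
  destruct (Rle_or_lt (s * tau) t0) as [Hle|Hgt].
  - pose proof (Hnpos (s * tau) ltac:(nra)). lra.
  - specialize (Hq0 Hgt).
    assert (H2 : dfr * (q0s * dphi (s * tau)) <= dfr * dphi tau) by (apply Rmult_le_compat_l; lra).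
    assert (H3 : 0 < (q0s - y) * (dfr * dphi (s * tau))) by (apply Rmult_lt_0_compat; nra).
    assert (H4 : dfx * dphi (s * tau) <= y * dfr * dphi (s * tau)) by (apply Rmult_le_compat_r; lra).
    nra.
Qed.

End PhiDerivative.

(** * The equilibrium equation *)

(* Sign of [r''] read off from the equilibrium equation: the coefficient of
   [r''] is nonnegative, so [r''] has the sign of the right-hand side, which
   is that of [term1] when [term1] and [-term2] agree in sign. *)
Lemma equilibrium_sign (n : nat) (fx dr tau ddphi_v ddh_w ddr term1 term2 : R) :
  (2 <= n)%nat -> 0 < fx -> 0 <= ddphi_v -> 0 <= ddh_w -> 0 < dr -> 0 < tau ->
  fx * (ddphi_v + ddh_w * tau ^ (2 * (n - 1))) * ddr
    = (INR n - 1) * term1 - (INR n - 1) * term2 * ddh_w * dr * tau ^ (2 * n - 3) ->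
  (term1 < 0 -> 0 < term2 -> ddr < 0) /\ (0 < term1 -> term2 < 0 -> 0 < ddr).
Proof.
  intros Hn Hfx Hphi Hh Hdr Htau Heq.
  assert (Hn1 : 1 <= INR n - 1) by (apply le_INR in Hn; simpl in Hn; lra).
  pose proof (pow_lt tau (2 * (n - 1)) Htau) as P1.
  pose proof (pow_lt tau (2 * n - 3) Htau) as P2.
  set (K := fx * (ddphi_v + ddh_w * tau ^ (2 * (n - 1)))) in Heq.
  assert (HK : 0 <= K) by (apply Rmult_le_pos; [lra|]; assert (0 <= ddh_w * tau ^ (2 * (n - 1))) by (apply Rmult_le_pos; lra); lra).
  assert (Hw : 0 <= ddh_w * dr * tau ^ (2 * n - 3)) by (repeat apply Rmult_le_pos; lra).
  assert (Hrhs : (INR n - 1) * term1 - (INR n - 1) * term2 * ddh_w * dr * tau ^ (2 * n - 3)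
                 = (INR n - 1) * (term1 - term2 * (ddh_w * dr * tau ^ (2 * n - 3)))) by ring.
  rewrite Hrhs in Heq. split; intros H1 H2.
  - destruct (Rlt_or_le ddr 0) as [ok|Hge]; [exact ok|]. exfalso.
    assert (0 <= K * ddr) by (apply Rmult_le_pos; lra).
    assert (0 <= term2 * (ddh_w * dr * tau ^ (2 * n - 3))) by (apply Rmult_le_pos; lra).
    assert (term1 - term2 * (ddh_w * dr * tau ^ (2 * n - 3)) < 0) by lra.
    nra.
  - destruct (Rlt_or_le 0 ddr) as [ok|Hle]; [exact ok|]. exfalso.
    assert (K * ddr <= 0) by nra.
    assert (0 <= - term2 * (ddh_w * dr * tau ^ (2 * n - 3))) by (apply Rmult_le_pos; lra).
    assert (0 < term1 - term2 * (ddh_w * dr * tau ^ (2 * n - 3))) by lra.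
    nra.
Qed.

(* The setting of the theorem: all its hypotheses that the argument uses (it
   does not need [0 < lam], [phi > 0], the continuity of [phi''], [h''], [q1'],
   [q0'] or the limits of [q1], [q0]). *)
Section EquilibriumSolution.
Variables (n : nat) (kappa f df : R -> R) (lam : R) (phi dphi ddphi h dh ddh : R -> R)
  (t0 : R) (q1 q0 dq1 dq0 q1inv q0inv b0 b1 : R -> R) (r dr ddr : R -> R) (r0 : R).
Hypothesis hn : (2 <= n)%nat.
Hypothesis hkappa : forall x, 0 <= x -> limit1_in kappa nonneg_R (kappa x) x.
Hypothesis hf : forall x, 0 <= x -> deriv_within nonneg_R f x (df x).
Hypothesis hdf : forall x, 0 <= x -> deriv_within nonneg_R df x (- kappa x * f x).
Hypothesis hf0 : f 0 = 0.
Hypothesis hdf0 : df 0 = 1.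
Hypothesis hmu : forall pr : Riemann_integrable (fun s => s * Rmax (kappa s) 0) 0 (Rmax lam 1),
  RiemannInt pr <= 1.
Hypothesis hphi1 : forall v, 0 < v -> deriv_within pos_R phi v (dphi v).
Hypothesis hphi2 : forall v, 0 < v -> deriv_within pos_R dphi v (ddphi v).
Hypothesis hphi_cvx : convex_pos phi.
Hypothesis hh1 : forall v, 0 < v -> deriv_within pos_R h v (dh v).
Hypothesis hh2 : forall v, 0 < v -> deriv_within pos_R dh v (ddh v).
Hypothesis hh_cvx : strictly_convex_pos h.
Hypothesis hA5 : forall v w, 0 < v -> v < w -> v * dphi v < w * dphi w.
Hypothesis ht0 : 0 <= t0.
Hypothesis ht0phi : limit1_in dphi pos_R 0 t0.
Hypothesis hq1_def : forall s, 1 <= s ->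
  is_lub (fun y => exists v, t0 < v /\ y = dphi v / dphi (s * v)) (q1 s).
Hypothesis hq0_def : forall s, 0 < s <= 1 ->
  is_glb (fun y => exists v, t0 / s < v /\ y = dphi v / dphi (s * v)) (q0 s).
Hypothesis hq1_C1 : forall s, 1 <= s -> deriv_within (fun x => 1 <= x) q1 s (dq1 s).
Hypothesis hq0_C1 : forall s, 0 < s <= 1 -> deriv_within (fun x => 0 < x <= 1) q0 s (dq0 s).
Hypothesis hdq1_neg : forall s, 1 <= s -> dq1 s < 0.
Hypothesis hdq0_neg : forall s, 0 < s <= 1 -> dq0 s < 0.
Hypothesis hq1inv : forall y, 0 < y <= 1 -> 1 <= q1inv y /\ q1 (q1inv y) = y.
Hypothesis hq0inv : forall y, 1 <= y -> (0 < q0inv y <= 1) /\ q0 (q0inv y) = y.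
Hypothesis hb0 : forall rho, 0 <= rho -> is_glb (fun y => exists x, 0 <= x <= rho /\ y = df x) (b0 rho).
Hypothesis hb1 : forall rho, 0 <= rho -> is_lub (fun y => exists x, 0 <= x <= rho /\ y = df x) (b1 rho).
Hypothesis hr1 : forall rho, 0 < rho <= 1 -> deriv_within (fun x => 0 < x <= 1) r rho (dr rho).
Hypothesis hdr_cont : forall rho, 0 < rho <= 1 -> limit1_in dr (fun x => 0 < x <= 1) (dr rho) rho.
Hypothesis hr2 : forall rho, 0 < rho < 1 -> derivable_pt_lim dr rho (ddr rho).
Hypothesis hdr_pos : forall rho, 0 < rho <= 1 -> 0 < dr rho.
Hypothesis hr0 : limit1_in r (fun x => 0 < x <= 1) r0 0.
Hypothesis hr0_nonneg : 0 <= r0.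
Hypothesis hrlam : r 1 = lam.
Hypothesis hode : forall rho, 0 < rho < 1 ->
  let tau := f (r rho) / f rho in
  f rho * (ddphi (dr rho) + ddh (dr rho * tau ^ (n - 1)) * tau ^ (2 * (n - 1))) * ddr rho
  = (INR n - 1) * (df (r rho) * dphi tau - df rho * dphi (dr rho))
    - (INR n - 1) * (df (r rho) * dr rho - df rho * tau)
        * ddh (dr rho * tau ^ (n - 1)) * dr rho * tau ^ (2 * n - 3).

(* All radii involved, [rho] and [r rho], lie in [0,L]. *)
Let L := Rmax lam 1.

Lemma L_ge_1 : 1 <= L.
Proof. apply Rmax_r. Qed.

Lemma df_pos_L x : 0 <= x <= L -> 0 < df x.
Proof.
  intros Hx. pose proof L_ge_1.
  apply (jacobi_derivative_pos kappa f df hkappa hf hdf hf0 hdf0 L); [lra| exact hmu| exact Hx].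
Qed.

Lemma b0_le_df x y : 0 <= y <= x -> b0 x <= df y.
Proof. intros Hy. apply (proj1 (hb0 x ltac:(lra))). exists y; split; [exact Hy| reflexivity]. Qed.

Lemma df_le_b1 x y : 0 <= y <= x -> df y <= b1 x.
Proof. intros Hy. apply (proj1 (hb1 x ltac:(lra))). exists y; split; [exact Hy| reflexivity]. Qed.

Lemma b0_ge_b0L x : 0 <= x <= L -> b0 L <= b0 x.
Proof.
  intros Hx. apply (proj2 (hb0 x ltac:(lra))). intros z [y [Hy ->]]. apply b0_le_df. lra.
Qed.

Lemma b0L_pos : 0 < b0 L.
Proof.
  pose proof L_ge_1.
  apply (positive_glb_on_compact df L); [lra| | intros; apply df_pos_L; lra| apply hb0; lra].
  intros x Hx. apply continuous_within_of_deriv with (- kappa x * f x). apply hdf. exact Hx.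
Qed.

Lemma b0_le_1 x : 0 <= x -> b0 x <= 1.
Proof. intros Hx. rewrite <- hdf0. apply b0_le_df. lra. Qed.

Lemma b1_ge_1 x : 0 <= x -> 1 <= b1 x.
Proof. intros Hx. rewrite <- hdf0. apply df_le_b1. lra. Qed.

Lemma f_linear_bounds y : 0 < y <= L -> b0 L * y <= f y <= b1 L * y.
Proof.
  intros Hy.
  assert (Hder : forall x, 0 < x < y -> derivable_pt_lim f x (df x))
    by (intros x Hx; apply (f_derivable f df hf); lra).
  assert (Hcont : forall x, 0 <= x <= y -> continuous_within (fun z => 0 <= z <= y) f x)
    by (intros x Hx; apply (f_continuous_on f df hf); lra).
  pose proof (MVT_lower_bound f df 0 y ltac:(lra) Hder Hcont (b0 L)) as Hlow.
  pose proof (MVT_upper_bound f df 0 y ltac:(lra) Hder Hcont (b1 L)) as Hup.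
  rewrite hf0 in Hlow, Hup.
  assert (f y - 0 <= b1 L * (y - 0)) by (apply Hup; intros x Hx; apply df_le_b1; lra).
  assert (b0 L * (y - 0) <= f y - 0) by (apply Hlow; intros x Hx; apply b0_le_df; lra).
  lra.
Qed.

Lemma f_pos y : 0 < y <= L -> 0 < f y.
Proof. intros Hy. pose proof (f_linear_bounds y Hy). pose proof b0L_pos. nra. Qed.

(* Convexity of [phi] and [h] makes the coefficient of [r''] nonnegative. *)
Lemma ddphi_nonneg v : 0 < v -> 0 <= ddphi v.
Proof. intros Hv. exact (convex_second_derivative_nonneg phi dphi ddphi v hphi_cvx hphi1 Hv (hphi2 v Hv)). Qed.

Lemma ddh_nonneg v : 0 < v -> 0 <= ddh v.
Proof.
  intros Hv.
  exact (convex_second_derivative_nonneg h dh ddh v (strictly_convex_convex h hh_cvx) hh1 Hv (hh2 v Hv)).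
Qed.

Lemma q1_decreasing a b : 1 <= a < b -> q1 b < q1 a.
Proof.
  intros Hab. apply (decreasing_of_neg_deriv q1 dq1 a b); [lra| | |].
  - intros x Hx. apply (derivable_of_deriv_within (fun x => 1 <= x) q1 x (dq1 x) (x - 1));
      [apply hq1_C1; lra| lra|].
    intros y Hy. apply Rabs_def2 in Hy. lra.
  - intros x Hx. apply (continuous_within_weaken (fun x => 1 <= x)); [intros; lra|].
    apply continuous_within_of_deriv with (dq1 x). apply hq1_C1. lra.
  - intros x Hx. apply hdq1_neg. lra.
Qed.

Lemma q0_decreasing a b : 0 < a < b -> b <= 1 -> q0 b < q0 a.
Proof.
  intros Hab Hb. apply (decreasing_of_neg_deriv q0 dq0 a b); [lra| | |].
  - intros x Hx.
    apply (derivable_of_deriv_within (fun x => 0 < x <= 1) q0 x (dq0 x) (Rmin (x - a) (1 - x)));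
      [apply hq0_C1; lra| apply Rmin_pos; lra|].
    intros y Hy. apply Rabs_def2 in Hy.
    pose proof (Rmin_l (x - a) (1 - x)). pose proof (Rmin_r (x - a) (1 - x)). lra.
  - intros x Hx. apply (continuous_within_weaken (fun x => 0 < x <= 1)); [intros; lra|].
    apply continuous_within_of_deriv with (dq0 x). apply hq0_C1. lra.
  - intros x Hx. apply hdq0_neg. lra.
Qed.

Lemma dphi_le_q1 s v : 1 <= s -> t0 < v -> dphi v <= q1 s * dphi (s * v).
Proof.
  intros Hs Hv. destruct (dphi_sign dphi t0 ht0 ht0phi hA5) as [Hdphi _].
  assert (Hp : 0 < dphi (s * v)) by (apply Hdphi; nra).
  assert (Hle : dphi v / dphi (s * v) <= q1 s)
    by (apply (proj1 (hq1_def s Hs)); exists v; split; [exact Hv| reflexivity]).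
  apply (Rmult_le_compat_r (dphi (s * v))) in Hle; [|lra].
  replace (dphi v / dphi (s * v) * dphi (s * v)) with (dphi v) in Hle by (field; lra). exact Hle.
Qed.

Lemma q0_le_dphi s v : 0 < s <= 1 -> t0 < s * v -> q0 s * dphi (s * v) <= dphi v.
Proof.
  intros Hs Hv. destruct (dphi_sign dphi t0 ht0 ht0phi hA5) as [Hdphi _].
  assert (Hp : 0 < dphi (s * v)) by (apply Hdphi; lra).
  assert (Hle : q0 s <= dphi v / dphi (s * v)).
  { apply (proj1 (hq0_def s Hs)). exists v; split; [| reflexivity].
    apply (Rmult_lt_reg_r s); [lra|]. replace (t0 / s * s) with t0 by (field; lra). lra. }
  apply (Rmult_le_compat_r (dphi (s * v))) in Hle; [|lra].
  replace (dphi v / dphi (s * v) * dphi (s * v)) with (dphi v) in Hle by (field; lra). exact Hle.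
Qed.

Lemma r_derivable x : 0 < x < 1 -> derivable_pt_lim r x (dr x).
Proof.
  intros Hx.
  apply (derivable_of_deriv_within (fun y => 0 < y <= 1) r x (dr x) (Rmin x (1 - x)));
    [apply hr1; lra| apply Rmin_pos; lra|].
  intros y Hy. apply Rabs_def2 in Hy.
  pose proof (Rmin_l x (1 - x)). pose proof (Rmin_r x (1 - x)). lra.
Qed.

Lemma r_continuous_on a b x : 0 < a -> b <= 1 -> a <= x <= b ->
  continuous_within (fun y => a <= y <= b) r x.
Proof.
  intros Ha Hb Hx. apply (continuous_within_weaken (fun y => 0 < y <= 1)); [intros; lra|].
  apply continuous_within_of_deriv with (dr x). apply hr1. lra.
Qed.

Lemma r_increasing a b : 0 < a < b -> b <= 1 -> r a < r b.
Proof.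
  intros Hab Hb. apply (increasing_of_pos_deriv r dr a b); [lra| | |].
  - intros x Hx. apply r_derivable. lra.
  - intros x Hx. apply r_continuous_on; lra.
  - intros x Hx. apply hdr_pos. lra.
Qed.

Lemma r0_le_r x : 0 < x <= 1 -> r0 <= r x.
Proof.
  intros Hx. rewrite <- (Rplus_0_r r0), <- (Rmult_0_l x).
  apply (right_limit_lower_bound r (fun y => 0 < y <= 1)); [lra| intros; lra| exact hr0|].
  intros e He. pose proof (r_increasing e x ltac:(lra) ltac:(lra)). lra.
Qed.

Lemma r_range x : 0 < x <= 1 -> 0 < r x <= L.
Proof.
  intros Hx. pose proof (r0_le_r (x / 2) ltac:(lra)).
  pose proof (r_increasing (x / 2) x ltac:(lra) ltac:(lra)).
  pose proof (Rmax_l lam 1). split; [lra|]. unfold L.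
  destruct (Req_dec x 1) as [->|Hne]; [lra|].
  pose proof (r_increasing x 1 ltac:(lra) ltac:(lra)). lra.
Qed.

Lemma r_lower_linear m b : 0 < b <= 1 -> (forall x, 0 < x < b -> m <= dr x) ->
  forall x, 0 < x <= b -> r0 + m * x <= r x.
Proof.
  intros Hb Hm x Hx.
  apply (right_limit_lower_bound r (fun y => 0 < y <= 1)); [lra| intros; lra| exact hr0|].
  intros e He. apply (MVT_lower_bound r dr e x); [lra| | |].
  - intros z Hz. apply r_derivable. lra.
  - intros z Hz. apply r_continuous_on; lra.
  - intros z Hz. apply Hm. lra.
Qed.

Lemma r_upper_linear M b : 0 < b <= 1 -> (forall x, 0 < x < b -> dr x <= M) ->
  forall x, 0 < x <= b -> r x <= r0 + M * x.
Proof.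
  intros Hb HM x Hx.
  assert (Hopp : - r0 + - M * x <= - r x); [|lra].
  apply (right_limit_lower_bound (fun y => - r y) (fun y => 0 < y <= 1));
    [lra| intros; lra| apply limit_Ropp, hr0|].
  intros e He. assert (r x - r e <= M * (x - e)); [|lra].
  apply (MVT_upper_bound r dr e x); [lra| | |].
  - intros z Hz. apply r_derivable. lra.
  - intros z Hz. apply r_continuous_on; lra.
  - intros z Hz. apply HM. lra.
Qed.

Lemma dr_ge_right_end b : 0 < b < 1 -> (forall x, 0 < x <= b -> ddr x < 0) ->
  forall x, 0 < x <= b -> dr b <= dr x.
Proof.
  intros Hb Hneg x Hx. destruct (Req_dec x b) as [->|Hne]; [lra|].
  assert (dr b - dr x <= 0 * (b - x)); [|lra].
  apply (MVT_upper_bound dr ddr x b); [lra| intros; apply hr2; lra| |].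
  - intros z Hz. apply continuous_within_of_continuity, (derivable_pt_lim_continuity _ _ _ (hr2 z ltac:(lra))).
  - intros z Hz. left. apply Hneg. lra.
Qed.

Lemma dr_le_right_end b : 0 < b < 1 -> (forall x, 0 < x <= b -> 0 < ddr x) ->
  forall x, 0 < x <= b -> dr x <= dr b.
Proof.
  intros Hb Hpos x Hx. destruct (Req_dec x b) as [->|Hne]; [lra|].
  assert (0 * (b - x) <= dr b - dr x); [|lra].
  apply (MVT_lower_bound dr ddr x b); [lra| intros; apply hr2; lra| |].
  - intros z Hz. apply continuous_within_of_continuity, (derivable_pt_lim_continuity _ _ _ (hr2 z ltac:(lra))).
  - intros z Hz. left. apply Hpos. lra.
Qed.

Let tau (x : R) : R := f (r x) / f x.
Let s (x : R) : R := dr x / tau x.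
Let dtau (x : R) : R := tau x * (df (r x) * s x - df x) / f x.
Let ds (x : R) : R := (ddr x - dtau x * s x) / tau x.

Lemma f_pos_at x : 0 < x <= 1 -> 0 < f x /\ 0 < f (r x).
Proof. intros Hx. pose proof L_ge_1. split; apply f_pos; [lra| apply r_range; exact Hx]. Qed.

Lemma tau_pos x : 0 < x <= 1 -> 0 < tau x.
Proof. intros Hx. destruct (f_pos_at x Hx). apply Rdiv_lt_0_compat; assumption. Qed.

Lemma s_pos x : 0 < x <= 1 -> 0 < s x.
Proof. intros Hx. apply Rdiv_lt_0_compat; [apply hdr_pos| apply tau_pos]; exact Hx. Qed.

Lemma dr_eq x : 0 < x <= 1 -> dr x = s x * tau x.
Proof. intros Hx. pose proof (tau_pos x Hx). unfold s. field. lra. Qed.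

Lemma tau_derivable x : 0 < x < 1 -> derivable_pt_lim tau x (dtau x).
Proof.
  intros Hx. destruct (f_pos_at x ltac:(lra)) as [Hfx Hfr].
  replace (dtau x) with ((df (r x) * dr x * f x - df x * f (r x)) / (f x)²)
    by (unfold dtau, s, tau, Rsqr; field; split; lra).
  apply (derivable_pt_lim_div (fun y => f (r y)) f x (df (r x) * dr x) (df x)); [| | lra].
  - apply (derivable_pt_lim_comp r f x (dr x) (df (r x))); [apply r_derivable; exact Hx|].
    apply (f_derivable f df hf). apply r_range. lra.
  - apply (f_derivable f df hf). lra.
Qed.

Lemma s_derivable x : 0 < x < 1 -> derivable_pt_lim s x (ds x).
Proof.
  intros Hx. pose proof (tau_pos x ltac:(lra)) as Htau.
  replace (ds x) with ((ddr x * tau x - dtau x * dr x) / (tau x)²)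
    by (unfold ds, s, Rsqr; field; lra).
  apply (derivable_pt_lim_div dr tau x); [apply hr2, Hx| apply tau_derivable, Hx| lra].
Qed.

(* [s] is continuous at 1 relative to (0,1]; this allows [rho = 1]. *)
Lemma s_continuous_at_1 : continuous_within (fun y => 0 < y <= 1) s 1.
Proof.
  destruct (f_pos_at 1 ltac:(lra)) as [Hf1 Hfr1].
  pose proof (tau_pos 1 ltac:(lra)) as Htau1.
  unfold continuous_within, s, tau.
  apply (limit_mul dr (fun x => / (f (r x) / f x))); [apply hdr_cont; lra|].
  apply (limit_inv (fun x => f (r x) / f x)); [| unfold tau in Htau1; lra].
  apply (limit_mul (fun x => f (r x)) (fun x => / f x)).
  - apply (continuous_within_comp _ r f 1); [apply continuous_within_of_deriv with (dr 1), hr1; lra|].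
    apply (derivable_pt_lim_continuity _ _ (df (r 1))), (f_derivable f df hf).
    apply r_range. lra.
  - apply (limit_inv f); [| lra].
    apply continuous_within_of_continuity, (derivable_pt_lim_continuity _ _ (df 1)), (f_derivable f df hf).
    lra.
Qed.

Lemma df_pos_at x : 0 < x <= 1 -> 0 < df x /\ 0 < df (r x).
Proof.
  intros Hx. pose proof L_ge_1. pose proof (r_range x Hx).
  split; apply df_pos_L; lra.
Qed.

Lemma concave_where_slope_large x y : 0 < x < 1 -> 0 < y <= 1 ->
  y * df (r x) <= df x -> q1inv y < s x -> df x < df (r x) * s x -> ddr x < 0.
Proof.
  intros Hx Hy Hdf Hq Hgap.
  destruct (f_pos_at x ltac:(lra)) as [Hfx Hfr]. destruct (df_pos_at x ltac:(lra)) as [Hdfx Hdfr].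
  pose proof (tau_pos x ltac:(lra)) as Htau. pose proof (dr_eq x ltac:(lra)) as Hdr.
  pose proof (hdr_pos x ltac:(lra)) as Hdrx.
  destruct (hq1inv y Hy) as [Hq1 Hq1y].
  assert (Hterm1 : df (r x) * dphi (tau x) - df x * dphi (dr x) < 0).
  { rewrite Hdr. apply (phi_comparison_above dphi t0 ht0 ht0phi hA5 _ _ _ _ y (q1 (s x)));
      try assumption; try lra.
    - intros Ht. apply dphi_le_q1; lra.
    - rewrite <- Hq1y. apply q1_decreasing. lra. }
  assert (Hterm2 : 0 < df (r x) * dr x - df x * tau x) by (rewrite Hdr; nra).
  pose proof (hode x Hx) as Hode. cbv zeta in Hode. fold (tau x) in Hode.
  apply (proj1 (equilibrium_sign n _ _ _ _ _ _ _ _ hn Hfx (ddphi_nonneg (dr x) ltac:(lra))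
    (ddh_nonneg (dr x * tau x ^ (n - 1)) ltac:(apply Rmult_lt_0_compat; [lra| apply pow_lt; exact Htau]))
    Hdrx Htau Hode) Hterm1 Hterm2).
Qed.

Lemma convex_where_slope_small x y : 0 < x < 1 -> 1 <= y ->
  df x <= y * df (r x) -> s x < q0inv y -> df (r x) * s x < df x -> 0 < ddr x.
Proof.
  intros Hx Hy Hdf Hq Hgap.
  destruct (f_pos_at x ltac:(lra)) as [Hfx Hfr]. destruct (df_pos_at x ltac:(lra)) as [Hdfx Hdfr].
  pose proof (tau_pos x ltac:(lra)) as Htau. pose proof (dr_eq x ltac:(lra)) as Hdr.
  pose proof (hdr_pos x ltac:(lra)) as Hdrx.
  pose proof (s_pos x ltac:(lra)) as Hs.
  destruct (hq0inv y Hy) as [Hq0 Hq0y].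
  assert (Hterm1 : 0 < df (r x) * dphi (tau x) - df x * dphi (dr x)).
  { rewrite Hdr. apply (phi_comparison_below dphi t0 ht0 ht0phi hA5 _ _ _ _ y (q0 (s x)));
      try assumption; try lra.
    - intros Ht. apply q0_le_dphi; lra.
    - rewrite <- Hq0y. apply q0_decreasing; lra. }
  assert (Hterm2 : df (r x) * dr x - df x * tau x < 0) by (rewrite Hdr; nra).
  pose proof (hode x Hx) as Hode. cbv zeta in Hode. fold (tau x) in Hode.
  apply (proj2 (equilibrium_sign n _ _ _ _ _ _ _ _ hn Hfx (ddphi_nonneg (dr x) ltac:(lra))
    (ddh_nonneg (dr x * tau x ^ (n - 1)) ltac:(apply Rmult_lt_0_compat; [lra| apply pow_lt; exact Htau]))
    Hdrx Htau Hode) Hterm1 Hterm2).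
Qed.

Lemma df_bounds_upto rho x : 0 < x <= rho -> rho <= 1 ->
  b0 rho <= df x <= b1 rho /\ b0 (r rho) <= df (r x) <= b1 (r rho) /\
  0 < b0 rho <= 1 /\ 0 < b0 (r rho) <= 1 /\ 1 <= b1 rho /\ 1 <= b1 (r rho).
Proof.
  intros Hx Hrho. pose proof L_ge_1. pose proof b0L_pos.
  pose proof (r_range x ltac:(lra)). pose proof (r_range rho ltac:(lra)).
  assert (Hxr : r x <= r rho)
    by (destruct (Req_dec x rho) as [->|]; [lra| left; apply r_increasing; lra]).
  pose proof (b0_ge_b0L rho ltac:(lra)). pose proof (b0_ge_b0L (r rho) ltac:(lra)).
  repeat split; try lra;
    solve [apply b0_le_df; lra| apply df_le_b1; lra| apply b0_le_1; lra| apply b1_ge_1; lra].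
Qed.

Lemma tau_lower_bound m b : 0 < m -> b <= 1 -> (forall x, 0 < x <= b -> m * x <= r x) ->
  forall x, 0 < x <= b -> b0 L * m / b1 L <= tau x.
Proof.
  intros Hm Hb Hr x Hx. pose proof L_ge_1. pose proof b0L_pos.
  pose proof (b1_ge_1 L ltac:(lra)).
  destruct (f_linear_bounds x ltac:(lra)) as [_ Hfx].
  destruct (f_linear_bounds (r x) (r_range x ltac:(lra))) as [Hfr _].
  destruct (f_pos_at x ltac:(lra)) as [Hfx0 _]. specialize (Hr x Hx).
  unfold tau. apply (Rmult_le_reg_r (f x)); [exact Hfx0|].
  replace (f (r x) / f x * f x) with (f (r x)) by (field; lra).
  assert (Hscaled : b0 L * m / b1 L * f x <= b0 L * m / b1 L * (b1 L * x))
    by (apply Rmult_le_compat_l; [apply Rmult_le_pos; [nra| left; apply Rinv_0_lt_compat; lra]| lra]).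
  replace (b0 L * m / b1 L * (b1 L * x)) with (b0 L * (m * x)) in Hscaled by (field; lra).
  assert (b0 L * (m * x) <= b0 L * r x) by (apply Rmult_le_compat_l; lra).
  lra.
Qed.

Lemma tau_upper_bound M b : b <= 1 -> (forall x, 0 < x <= b -> r x <= M * x) ->
  forall x, 0 < x <= b -> tau x <= b1 L * M / b0 L.
Proof.
  intros Hb Hr x Hx. pose proof L_ge_1. pose proof b0L_pos.
  destruct (f_linear_bounds x ltac:(lra)) as [Hfx _].
  destruct (f_linear_bounds (r x) (r_range x ltac:(lra))) as [_ Hfr].
  destruct (f_pos_at x ltac:(lra)) as [Hfx0 _]. specialize (Hr x Hx).
  pose proof (r_range x ltac:(lra)). pose proof (b1_ge_1 L ltac:(lra)).
  assert (HM : 0 <= M) by nra.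
  unfold tau. apply (Rmult_le_reg_r (f x)); [exact Hfx0|].
  replace (f (r x) / f x * f x) with (f (r x)) by (field; lra).
  assert (Hscaled : b1 L * M / b0 L * (b0 L * x) <= b1 L * M / b0 L * f x)
    by (apply Rmult_le_compat_l; [apply Rmult_le_pos; [nra| left; apply Rinv_0_lt_compat; lra]| lra]).
  replace (b1 L * M / b0 L * (b0 L * x)) with (b1 L * (M * x)) in Hscaled by (field; lra).
  assert (b1 L * r x <= b1 L * (M * x)) by (apply Rmult_le_compat_l; lra).
  lra.
Qed.

(** Suppose [s >= c] at some [b] with
    [c > alpha_1(rho, r rho)].  Then on (0,b] the solution is concave and
    [tau' >= eps tau / f], so [s] decreases and [s >= c] persists down to 0;
    hence [r' >= r'(b)], [tau] is bounded below, and [tau' >~ 1/x] makes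
    [tau] diverge to [-oo] at 0, absurd. *)

Section SlopeAbove.
Variables (rho c b : R).
Hypothesis Hrho : 0 < rho <= 1.
Hypothesis Hb : 0 < b <= rho.
Hypothesis Hb1 : b < 1.
Hypothesis Hcq : q1inv (b0 rho / b1 (r rho)) < c.
Hypothesis Hca : b1 rho < b0 (r rho) * c.

Let eps := b0 (r rho) * c - b1 rho.

Lemma slope_above_dynamics x : 0 < x <= b -> c <= s x ->
  ddr x < 0 /\ tau x * eps / f x <= dtau x.
Proof.
  intros Hx Hcs.
  destruct (df_bounds_upto rho x ltac:(lra) ltac:(lra))
    as [Hdfx [Hdfr [Hb0rho [Hb0r [Hb1rho Hb1r]]]]].
  set (y := b0 rho / b1 (r rho)) in *.
  assert (Hy : 0 < y <= 1).
  { unfold y. split; [apply Rdiv_lt_0_compat; lra|].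
    apply (Rmult_le_reg_r (b1 (r rho))); [lra|]. unfold Rdiv.
    rewrite Rmult_assoc, Rinv_l, Rmult_1_r by lra. lra. }
  assert (Hc : 1 <= c) by (pose proof (proj1 (hq1inv y Hy)); lra).
  assert (Hgap : eps <= df (r x) * s x - df x)
    by (assert (b0 (r rho) * c <= df (r x) * s x) by (apply Rmult_le_compat; lra); unfold eps; lra).
  destruct (f_pos_at x ltac:(lra)) as [Hfx _]. pose proof (tau_pos x ltac:(lra)).
  split.
  - apply (concave_where_slope_large x y); [lra| exact Hy| | lra| unfold eps in Hgap; lra].
    assert (y * df (r x) <= y * b1 (r rho)) by (apply Rmult_le_compat_l; lra).
    replace (y * b1 (r rho)) with (b0 rho) in * by (unfold y; field; lra). lra.
  - unfold dtau, Rdiv. apply Rmult_le_compat_r; [left; apply Rinv_0_lt_compat; lra|].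
    apply Rmult_le_compat_l; lra.
Qed.

(* Hence [s' < 0] there, so [s >= c] at [b] propagates to all of (0,b]. *)
Lemma slope_above_persists : c <= s b -> forall x, 0 < x <= b -> c <= s x.
Proof.
  intros Hcb. apply (lower_barrier s ds b c); [lra| intros; apply s_derivable; lra| | exact Hcb].
  intros x Hx Hcs. destruct (slope_above_dynamics x Hx Hcs) as [Hddr Hdtau].
  destruct (f_pos_at x ltac:(lra)) as [Hfx _].
  pose proof (tau_pos x ltac:(lra)). pose proof (s_pos x ltac:(lra)).
  assert (Heps : 0 < eps) by (unfold eps; lra).
  assert (0 < tau x * eps / f x) by (apply Rdiv_lt_0_compat; [apply Rmult_lt_0_compat|]; lra).
  assert (Hnum : ddr x - dtau x * s x < 0) by nra.
  unfold ds, Rdiv. pose proof (Rinv_0_lt_compat (tau x) ltac:(lra)). nra.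
Qed.

Lemma slope_above_impossible : c <= s b -> False.
Proof.
  intros Hcb. pose proof (slope_above_persists Hcb) as Hpers.
  pose proof L_ge_1. pose proof b0L_pos. pose proof (b1_ge_1 L ltac:(lra)).
  set (m := dr b). assert (Hm : 0 < m) by (apply hdr_pos; lra).
  assert (Hdr : forall x, 0 < x <= b -> m <= dr x).
  { apply dr_ge_right_end; [lra|]. intros x Hx. exact (proj1 (slope_above_dynamics x Hx (Hpers x Hx))). }
  assert (Hr : forall x, 0 < x <= b -> m * x <= r x).
  { intros x Hx. pose proof (r_lower_linear m b ltac:(lra) ltac:(intros; apply Hdr; lra) x Hx). lra. }
  pose proof (tau_lower_bound m b Hm ltac:(lra) Hr) as Htau.
  set (Lb := b0 L * m / b1 L) in Htau.
  assert (HLb : 0 < Lb) by (unfold Lb; apply Rdiv_lt_0_compat; [apply Rmult_lt_0_compat|]; lra).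
  assert (Heps : 0 < eps) by (unfold eps; lra).
  apply (log_derivative_blows_up tau dtau b (Lb * eps / b1 L)); [lra| | | |].
  - apply Rdiv_lt_0_compat; [apply Rmult_lt_0_compat|]; lra.
  - intros x Hx. apply tau_derivable. lra.
  - intros x Hx. destruct (slope_above_dynamics x Hx (Hpers x Hx)) as [_ Hdtau].
    destruct (f_pos_at x ltac:(lra)) as [Hfx _]. destruct (f_linear_bounds x ltac:(lra)) as [_ Hfx'].
    specialize (Htau x Hx). eapply Rle_trans; [| exact Hdtau].
    replace (Lb * eps / b1 L / x) with (Lb * eps / (b1 L * x)) by (field; lra).
    unfold Rdiv. apply Rle_trans with (Lb * eps * / f x).
    + apply Rmult_le_compat_l; [nra| apply Rinv_le_contravar; lra].
    + apply Rmult_le_compat_r; [left; apply Rinv_0_lt_compat; lra| nra].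
  - intros x Hx. left. apply tau_pos. lra.
Qed.

End SlopeAbove.

Theorem slope_upper_bound rho : 0 < rho <= 1 ->
  dr rho <= Rmax (b1 rho / b0 (r rho)) (q1inv (b0 rho / b1 (r rho))) * (f (r rho) / f rho).
Proof.
  intros Hrho. set (M := Rmax (b1 rho / b0 (r rho)) (q1inv (b0 rho / b1 (r rho)))).
  apply Rnot_lt_le. intros Hgt. fold (tau rho) in Hgt.
  destruct (df_bounds_upto rho rho ltac:(lra) ltac:(lra)) as [_ [_ [_ [Hb0r _]]]].
  pose proof (tau_pos rho Hrho).
  assert (HsM : M < s rho).
  { apply (Rmult_lt_reg_r (tau rho)); [lra|]. rewrite <- dr_eq by exact Hrho. lra. }
  assert (Hb : exists b, 0 < b < 1 /\ b <= rho /\ M < s b).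
  { destruct (Req_dec rho 1) as [->|Hne].
    - destruct (exceeds_before_one s M s_continuous_at_1 HsM) as [b [Hb Hsb]].
      exists b; repeat split; lra.
    - exists rho; repeat split; lra. }
  destruct Hb as [b [Hb [Hbrho Hsb]]].
  apply (slope_above_impossible rho (s b) b); [lra| lra| lra| | | lra].
  - assert (HQ : q1inv (b0 rho / b1 (r rho)) <= M) by apply Rmax_r. lra.
  - assert (HA : b1 rho / b0 (r rho) <= M) by apply Rmax_l.
    apply (Rmult_lt_reg_r (/ b0 (r rho))); [apply Rinv_0_lt_compat; lra|].
    replace (b0 (r rho) * s b * / b0 (r rho)) with (s b) by (field; lra). unfold Rdiv in HA. lra.
Qed.

(** Suppose [r0 = 0] and [s <= c] at some [b] with
    [c < alpha_0(rho, r rho)].  Then on (0,b] the solution is convex and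
    [tau' <= - eps tau / f], so [s] increases and [s <= c] persists down to 0;
    hence [r <= r'(b) x], [tau] is bounded above while increasing towards 0
    like [-ln x], absurd. *)

Section SlopeBelow.
Variables (rho c b : R).
Hypothesis Hrho : 0 < rho <= 1.
Hypothesis Hb : 0 < b <= rho.
Hypothesis Hb1 : b < 1.
Hypothesis Hcq : c < q0inv (b1 rho / b0 (r rho)).
Hypothesis Hca : c * b1 (r rho) < b0 rho.

Let eps := b0 rho - c * b1 (r rho).

Lemma slope_below_dynamics x : 0 < x <= b -> s x <= c ->
  0 < ddr x /\ dtau x <= - (tau x * eps / f x).
Proof.
  intros Hx Hcs.
  destruct (df_bounds_upto rho x ltac:(lra) ltac:(lra))
    as [Hdfx [Hdfr [Hb0rho [Hb0r [Hb1rho Hb1r]]]]].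
  set (y := b1 rho / b0 (r rho)) in *.
  assert (Hy : 1 <= y).
  { unfold y. apply (Rmult_le_reg_r (b0 (r rho))); [lra|]. unfold Rdiv.
    rewrite Rmult_assoc, Rinv_l, Rmult_1_r by lra. lra. }
  pose proof (s_pos x ltac:(lra)) as Hs.
  assert (Hgap : df (r x) * s x - df x <= - eps)
    by (assert (df (r x) * s x <= b1 (r rho) * c) by (apply Rmult_le_compat; lra); unfold eps; lra).
  destruct (f_pos_at x ltac:(lra)) as [Hfx _]. pose proof (tau_pos x ltac:(lra)).
  split.
  - apply (convex_where_slope_small x y); [lra| exact Hy| | lra| unfold eps in Hgap; lra].
    assert (y * b0 (r rho) <= y * df (r x)) by (apply Rmult_le_compat_l; lra).
    replace (y * b0 (r rho)) with (b1 rho) in * by (unfold y; field; lra). lra.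
  - replace (- (tau x * eps / f x)) with (tau x * (- eps) / f x) by (field; lra).
    unfold dtau, Rdiv. apply Rmult_le_compat_r; [left; apply Rinv_0_lt_compat; lra|].
    apply Rmult_le_compat_l; lra.
Qed.

(* Hence [s' > 0] there, so [s <= c] at [b] propagates to all of (0,b]. *)
Lemma slope_below_persists : s b <= c -> forall x, 0 < x <= b -> s x <= c.
Proof.
  intros Hcb x Hx. assert (- c <= - s x); [|lra]. revert x Hx.
  apply (lower_barrier (fun x => - s x) (fun x => - ds x) b (- c)); [lra| | | lra].
  - intros x Hx. apply derivable_pt_lim_opp, s_derivable. lra.
  - intros x Hx Hcs. destruct (slope_below_dynamics x Hx ltac:(lra)) as [Hddr Hdtau].
    destruct (f_pos_at x ltac:(lra)) as [Hfx _].
    pose proof (tau_pos x ltac:(lra)). pose proof (s_pos x ltac:(lra)).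
    assert (Heps : 0 < eps) by (unfold eps; lra).
    assert (0 < tau x * eps / f x) by (apply Rdiv_lt_0_compat; [apply Rmult_lt_0_compat|]; lra).
    assert (Hnum : 0 < ddr x - dtau x * s x) by nra.
    unfold ds, Rdiv. pose proof (Rinv_0_lt_compat (tau x) ltac:(lra)). nra.
Qed.

Lemma slope_below_impossible : r0 <= 0 -> s b <= c -> False.
Proof.
  intros Hr0 Hcb. pose proof (slope_below_persists Hcb) as Hpers.
  pose proof L_ge_1. pose proof b0L_pos. pose proof (b1_ge_1 L ltac:(lra)).
  assert (Heps : 0 < eps) by (unfold eps; lra).
  assert (Hdyn : forall x, 0 < x <= b -> 0 < ddr x /\ dtau x <= - (tau x * eps / f x))
    by (intros x Hx; exact (slope_below_dynamics x Hx (Hpers x Hx))).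
  assert (Hdtau : forall x, 0 < x <= b -> dtau x < 0).
  { intros x Hx. destruct (Hdyn x Hx) as [_ Hd]. destruct (f_pos_at x ltac:(lra)) as [Hfx _].
    pose proof (tau_pos x ltac:(lra)).
    assert (0 < tau x * eps / f x) by (apply Rdiv_lt_0_compat; [apply Rmult_lt_0_compat|]; lra).
    lra. }
  set (m := dr b).
  assert (Hdr : forall x, 0 < x <= b -> dr x <= m)
    by (apply dr_le_right_end; [lra| intros x Hx; exact (proj1 (Hdyn x Hx))]).
  assert (Hr : forall x, 0 < x <= b -> r x <= m * x).
  { intros x Hx. pose proof (r_upper_linear m b ltac:(lra) ltac:(intros; apply Hdr; lra) x Hx). lra. }
  pose proof (tau_upper_bound m b ltac:(lra) Hr) as Htau_up.
  assert (Htau_low : forall x, 0 < x <= b -> tau b <= tau x).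
  { intros x Hx. destruct (Req_dec x b) as [->|Hne]; [lra|]. left.
    apply (decreasing_of_neg_deriv tau dtau x b); [lra| intros; apply tau_derivable; lra| |].
    - intros z Hz. apply continuous_within_of_continuity,
        (derivable_pt_lim_continuity _ _ _ (tau_derivable z ltac:(lra))).
    - intros z Hz. apply Hdtau. lra. }
  pose proof (tau_pos b ltac:(lra)) as Htb.
  apply (log_derivative_blows_up (fun x => b1 L * m / b0 L - tau x) (fun x => - dtau x) b
           (tau b * eps / b1 L)); [lra| | | |].
  - apply Rdiv_lt_0_compat; [apply Rmult_lt_0_compat|]; lra.
  - intros x Hx. replace (- dtau x) with (0 - dtau x) by ring.
    apply derivable_pt_lim_minus; [apply derivable_pt_lim_const| apply tau_derivable; lra].
  - intros x Hx. destruct (Hdyn x Hx) as [_ Hd].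
    destruct (f_pos_at x ltac:(lra)) as [Hfx _]. destruct (f_linear_bounds x ltac:(lra)) as [_ Hfx'].
    specialize (Htau_low x Hx). apply Rle_trans with (tau x * eps / f x); [| lra].
    replace (tau b * eps / b1 L / x) with (tau b * eps / (b1 L * x)) by (field; lra).
    unfold Rdiv. apply Rle_trans with (tau b * eps * / f x).
    + apply Rmult_le_compat_l; [nra| apply Rinv_le_contravar; lra].
    + apply Rmult_le_compat_r; [left; apply Rinv_0_lt_compat; lra| nra].
  - intros x Hx. specialize (Htau_up x Hx). lra.
Qed.

End SlopeBelow.

Theorem r0_pos_of_slope_below :
  (exists rho0, 0 < rho0 <= 1 /\
     dr rho0 < Rmin (b0 rho0 / b1 (r rho0)) (q0inv (b1 rho0 / b0 (r rho0))) * (f (r rho0) / f rho0)) ->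
  0 < r0.
Proof.
  intros [rho [Hrho Hlt]]. set (M := Rmin (b0 rho / b1 (r rho)) (q0inv (b1 rho / b0 (r rho)))) in Hlt.
  destruct (Rlt_or_le 0 r0) as [ok|Hr0]; [exact ok|]. exfalso.
  fold (tau rho) in Hlt.
  destruct (df_bounds_upto rho rho ltac:(lra) ltac:(lra)) as [_ [_ [_ [_ [_ Hb1r]]]]].
  pose proof (tau_pos rho Hrho).
  assert (HsM : s rho < M).
  { apply (Rmult_lt_reg_r (tau rho)); [lra|]. rewrite <- dr_eq by exact Hrho. lra. }
  assert (Hb : exists b, 0 < b < 1 /\ b <= rho /\ s b < M).
  { destruct (Req_dec rho 1) as [->|Hne].
    - assert (Hopp : continuous_within (fun y => 0 < y <= 1) (fun x => - s x) 1)
        by (apply (continuous_within_comp _ s Ropp 1 s_continuous_at_1),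
              (continuity_pt_opp (fun x => x)), derivable_continuous_pt, derivable_pt_id).
      destruct (exceeds_before_one (fun x => - s x) (- M) Hopp ltac:(lra)) as [b [Hb Hsb]].
      exists b; repeat split; lra.
    - exists rho; repeat split; lra. }
  destruct Hb as [b [Hb [Hbrho Hsb]]].
  apply (slope_below_impossible rho (s b) b); [lra| lra| lra| | | exact Hr0| lra].
  - assert (HQ : M <= q0inv (b1 rho / b0 (r rho))) by apply Rmin_r. lra.
  - assert (HA : M <= b0 rho / b1 (r rho)) by apply Rmin_l.
    apply (Rmult_lt_reg_r (/ b1 (r rho))); [apply Rinv_0_lt_compat; lra|].
    replace (s b * b1 (r rho) * / b1 (r rho)) with (s b) by (field; lra). unfold Rdiv in HA. lra.
Qed.

End EquilibriumSolution.

Theorem corollary4p1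
  (n : nat) (hn : (2 <= n)%nat)
  (kappa : R -> R)
  (* kappa continuous on [0,oo) *)
  (hkappa : forall x, 0 <= x -> limit1_in kappa nonneg_R (kappa x) x)
  (* f'' + kappa f = 0 on [0,oo), f(0)=0, f'(0)=1; df = f' *)
  (f df : R -> R)
  (hf : forall x, 0 <= x -> deriv_within nonneg_R f x (df x))
  (hdf : forall x, 0 <= x -> deriv_within nonneg_R df x (- kappa x * f x))
  (hf0 : f 0 = 0) (hdf0 : df 0 = 1)
  (lam : R) (hlam : 0 < lam)
  (* mu_+(max{lam,1}) <= 1 *)
  (hmu : forall pr : Riemann_integrable (fun s => s * Rmax (kappa s) 0) 0 (Rmax lam 1),
           RiemannInt pr <= 1)
  (* (A4): phi : (0,oo) -> (0,oo), C^2, convex; dphi = phi', ddphi = phi'' *)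
  (phi dphi ddphi : R -> R)
  (hphi_pos : forall v, 0 < v -> 0 < phi v)
  (hphi1 : forall v, 0 < v -> deriv_within pos_R phi v (dphi v))
  (hphi2 : forall v, 0 < v -> deriv_within pos_R dphi v (ddphi v))
  (hphi2c : forall v, 0 < v -> limit1_in ddphi pos_R (ddphi v) v)
  (hphi_cvx : convex_pos phi)
  (* (A1): h C^2 and strictly convex on (0,oo); dh = h', ddh = h'' *)
  (h dh ddh : R -> R)
  (hh1 : forall v, 0 < v -> deriv_within pos_R h v (dh v))
  (hh2 : forall v, 0 < v -> deriv_within pos_R dh v (ddh v))
  (hh2c : forall v, 0 < v -> limit1_in ddh pos_R (ddh v) v)
  (hh_cvx : strictly_convex_pos h)
  (* (A5): v phi'(v) increasing *)
  (hA5 : forall v w, 0 < v -> v < w -> v * dphi v < w * dphi w)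
  (* (A6) *)
  (t0 : R) (ht0 : 0 <= t0)
  (ht0phi : limit1_in dphi pos_R 0 t0)
  (q1 q0 dq1 dq0 : R -> R)
  (hq1_def : forall s, 1 <= s ->
     is_lub (fun y => exists v, t0 < v /\ y = dphi v / dphi (s * v)) (q1 s))
  (hq0_def : forall s, 0 < s <= 1 ->
     is_glb (fun y => exists v, t0 / s < v /\ y = dphi v / dphi (s * v)) (q0 s))
  (hq1_C1 : forall s, 1 <= s -> deriv_within (fun x => 1 <= x) q1 s (dq1 s))
  (hdq1_cont : forall s, 1 <= s -> limit1_in dq1 (fun x => 1 <= x) (dq1 s) s)
  (hq0_C1 : forall s, 0 < s <= 1 -> deriv_within (fun x => 0 < x <= 1) q0 s (dq0 s))
  (hdq0_cont : forall s, 0 < s <= 1 -> limit1_in dq0 (fun x => 0 < x <= 1) (dq0 s) s)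
  (hq1_lim : forall eps, 0 < eps -> exists M, forall s, M < s -> 1 <= s -> Rabs (q1 s) < eps)
  (hq0_lim : forall M, exists delta, 0 < delta /\ forall s, 0 < s < delta -> s <= 1 -> M < q0 s)
  (hdq1_neg : forall s, 1 <= s -> dq1 s < 0)
  (hdq0_neg : forall s, 0 < s <= 1 -> dq0 s < 0)
  (* q1^{-1} : (0,1] -> [1,oo) and q0^{-1} : [1,oo) -> (0,1] *)
  (q1inv q0inv : R -> R)
  (hq1inv : forall y, 0 < y <= 1 -> 1 <= q1inv y /\ q1 (q1inv y) = y)
  (hq0inv : forall y, 1 <= y -> (0 < q0inv y <= 1) /\ q0 (q0inv y) = y)
  (* b0(rho) = min_{[0,rho]} f', b1(rho) = max_{[0,rho]} f' *)
  (b0 b1 : R -> R)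
  (hb0 : forall rho, 0 <= rho -> is_glb (fun y => exists x, 0 <= x <= rho /\ y = df x) (b0 rho))
  (hb1 : forall rho, 0 <= rho -> is_lub (fun y => exists x, 0 <= x <= rho /\ y = df x) (b1 rho))
  (* equilibrium solution r with r(1) = lam; dr = r', ddr = r'' *)
  (r dr ddr : R -> R) (r0 : R)
  (hr1 : forall rho, 0 < rho <= 1 -> deriv_within (fun x => 0 < x <= 1) r rho (dr rho))
  (hdr_cont : forall rho, 0 < rho <= 1 -> limit1_in dr (fun x => 0 < x <= 1) (dr rho) rho)
  (hr2 : forall rho, 0 < rho < 1 -> derivable_pt_lim dr rho (ddr rho))
  (hdr_pos : forall rho, 0 < rho <= 1 -> 0 < dr rho)
  (hr0 : limit1_in r (fun x => 0 < x <= 1) r0 0) (hr0_nonneg : 0 <= r0)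
  (hrlam : r 1 = lam)
  (hode : forall rho, 0 < rho < 1 ->
     let tau := f (r rho) / f rho in
     f rho * (ddphi (dr rho) + ddh (dr rho * tau ^ (n - 1)) * tau ^ (2 * (n - 1))) * ddr rho
     = (INR n - 1) * (df (r rho) * dphi tau - df rho * dphi (dr rho))
       - (INR n - 1) * (df (r rho) * dr rho - df rho * tau)
           * ddh (dr rho * tau ^ (n - 1)) * dr rho * tau ^ (2 * n - 3))
  :
  (forall rho, 0 < rho <= 1 ->
     dr rho <= Rmax (b1 rho / b0 (r rho)) (q1inv (b0 rho / b1 (r rho)))
               * (f (r rho) / f rho))
  /\
  ((exists rho0, 0 < rho0 <= 1 /\
      dr rho0 < Rmin (b0 rho0 / b1 (r rho0)) (q0inv (b1 rho0 / b0 (r rho0)))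
                * (f (r rho0) / f rho0))
   -> 0 < r0).

Proof.
  split.
  - intros rho Hrho.
    apply (slope_upper_bound n kappa f df lam phi dphi ddphi h dh ddh t0 q1 dq1 q1inv b0 b1 r dr ddr r0);
      assumption.
  - apply (r0_pos_of_slope_below n kappa f df lam phi dphi ddphi h dh ddh t0 q0 dq0 q0inv b0 b1 r dr ddr r0);
      assumption.
Qed.
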